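(* Let $a\in\mathbf{R}$, $0<\tau_0^*<\tau^*$, and let $p(z,\xi)=(\xi+ia)^2\int_{\tau_0^*}^{\tau^*}e^{-(\tau^*-s)(\xi+ia)^2}w(s,z)\,ds$. Then: (i) for every $b>0$ and all integers $\alpha,\beta\ge0$ there exists $C>0$ such that $|\partial_z^\alpha\partial_\xi^\beta p(z,\xi)|\le C\langle\xi\rangle^{-\beta}$ for all $z\in\mathbf{C}$ with $|\operatorname{Im}z|<b$ and all $\xi\in\mathbf{R}$; (ii) there exists $C>0$ such that $|p(x,\xi)-w(\tau^*,x)|\le C\langle\xi\rangle^{-2}$ for all $x,\xi\in\mathbf{R}$.
   Context: $\langle\xi\rangle=\sqrt{1+|\xi|^2}$. Fix $a\in\mathbf{R}$; $K_a(\tau,y)=\frac{1}{\sqrt{4\pi\tau}}\exp(-\frac{|y|^2}{4\tau}+ay)$, and $w(\tau,x)=\int_0^\infty K_a(\tau,x-y)\,dy=\pi^{-1/2}e^{\tau a^2}\int_{-\infty}^{(x-2\tau a)/\sqrt{4\tau}}e^{-\theta^2}d\theta$, extended holomorphically in $x\in\mathbf{C}$ by the latter formula. The function $p$ is the symbol (acting on the right variable) of the operator $f\mapsto H_a\int_{\tau_0^*}^{\tau^*}U_a(\tau^*-s)[w(s,\cdot)f]\,ds$, where $H_a=-(\frac{d}{dy}-a)^2$ and $(U_a(\tau)\varphi)(y)=\int K_a(\tau,y-x)\varphi(x)dx$. *)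

From Stdlib Require Import Reals ClassicalEpsilon.
Open Scope R_scope.

Definition Cplx := (R * R)%type.
Definition RtoC (x : R) : Cplx := (x, 0).
Definition Cadd (z u : Cplx) : Cplx := (fst z + fst u, snd z + snd u).
Definition Copp (z : Cplx) : Cplx := (- fst z, - snd z).
Definition Csub (z u : Cplx) : Cplx := Cadd z (Copp u).
Definition Cmul (z u : Cplx) : Cplx :=
  (fst z * fst u - snd z * snd u, fst z * snd u + snd z * fst u).
Definition Cscal (r : R) (z : Cplx) : Cplx := (r * fst z, r * snd z).
Definition Cexp (z : Cplx) : Cplx :=
  (exp (fst z) * cos (snd z), exp (fst z) * sin (snd z)).
Definition Cnorm (z : Cplx) : R := sqrt (fst z ^ 2 + snd z ^ 2).

(* Riemann integral on [a,b] (value chosen by epsilon among the values of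
   RiemannInt; it is the Riemann integral whenever f is integrable). *)
Definition RInt_val (f : R -> R) (a b : R) : R :=
  epsilon (inhabits 0)
    (fun v => exists pr : Riemann_integrable f a b, RiemannInt pr = v).

Definition CInt (f : R -> Cplx) (a b : R) : Cplx :=
  (RInt_val (fun t => fst (f t)) a b, RInt_val (fun t => snd (f t)) a b).

Definition CInt_0_inf (f : R -> Cplx) : Cplx :=
  epsilon (inhabits (0, 0))
    (fun v => forall eps, 0 < eps -> exists M, forall T, M <= T ->
       Cnorm (Csub (CInt f 0 T) v) < eps).

Definition K_a (a tau : R) (y : Cplx) : Cplx :=
  Cscal (/ sqrt (4 * PI * tau))
    (Cexp (Cadd (Cscal (- / (4 * tau)) (Cmul y y)) (Cscal a y))).

(* w(tau, z) = int_0^oo K_a(tau, z - y) dy, z complex (this integral converges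
   absolutely for every complex z and is the holomorphic extension). *)
Definition w_fun (a tau : R) (z : Cplx) : Cplx :=
  CInt_0_inf (fun y => K_a a tau (Csub z (RtoC y))).

Definition p_sym (a tau0 taus : R) (z : Cplx) (xi : R) : Cplx :=
  let q2 := Cmul (xi, a) (xi, a) in
  Cmul q2 (CInt (fun s => Cmul (Cexp (Cscal (- (taus - s)) q2)) (w_fun a s z))
             tau0 taus).

Definition Cderiv (f : Cplx -> Cplx) (z : Cplx) : Cplx :=
  epsilon (inhabits (0, 0))
    (fun L => forall eps, 0 < eps -> exists delta, 0 < delta /\
       forall h : Cplx, Cnorm h < delta ->
         Cnorm (Csub (Csub (f (Cadd z h)) (f z)) (Cmul L h)) <= eps * Cnorm h).

Definition Rderiv_C (g : R -> Cplx) (x : R) : Cplx :=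
  epsilon (inhabits (0, 0))
    (fun L => forall eps, 0 < eps -> exists delta, 0 < delta /\
       forall h : R, Rabs h < delta ->
         Cnorm (Csub (Csub (g (x + h)) (g x)) (Cscal h L)) <= eps * Rabs h).

Definition Dz (F : Cplx -> R -> Cplx) : Cplx -> R -> Cplx :=
  fun z xi => Cderiv (fun u => F u xi) z.
Definition Dxi (F : Cplx -> R -> Cplx) : Cplx -> R -> Cplx :=
  fun z xi => Rderiv_C (fun t => F z t) xi.

Definition japan (xi : R) : R := sqrt (1 + xi ^ 2).

(** Write [q = xi + i a], [T = taus] and [g_beta(t, xi) = d_xi^beta (q^2 e^{-t q^2})], so that
    [p = int_{tau0}^{T} g_0(T - s, xi) w(s, z) ds].  Both [g_beta] and [d_z^alpha w] are finite
    sums of explicit monomials: [g_beta] of terms [c t^j q^k e^{-t q^2}] with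
    [k + beta = 2 + 2 j], and [d_z^alpha w] (for [alpha >= 1]) of derivatives of the heat kernel,
    terms [r s^-n z^k e^{-z^2/(4 s) + a z}].  Differentiating under the integral sign gives
    [d_z^alpha d_xi^beta p = int g_beta(T - s, xi) d_z^alpha w(s, z) ds], where [d_z^alpha w] is
    bounded on strips uniformly in [s] and [|g_beta(t, xi)| <= C <xi>^-beta (1 + xi^2 e^{-t xi^2/2})];
    the second summand integrates in [s] to [O(1)], being the [s]-derivative of
    [2 e^{-(T - s) xi^2/2}].
    For (ii), [g_0(T - s)] is the [s]-derivative of [e^{-(T - s) q^2}], so
    [p - w(T) = int g_0 (w(s) - w(T)) ds - e^{-(T - tau0) q^2} w(T)]; the integral is
    [O(<xi>^-2)] because [w] is Lipschitz in [s] and [(T - s) |g_0(T - s)| <= C <xi>^-2], and the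
    last term decays like a Gaussian in [xi]. *)

From Stdlib Require Import Reals Lra Lia Psatz ClassicalEpsilon FunctionalExtensionality List.
From Coquelicot Require Import Coquelicot.
Open Scope R_scope.

(** * Complex arithmetic *)

Definition C0 : Cplx := (0, 0).
Definition C1 : Cplx := (1, 0).

Ltac csimpl := unfold Csub, Cadd, Copp, Cmul, Cscal, RtoC, C0, C1 in *; cbn [fst snd] in *.
Ltac ceq := repeat match goal with z : Cplx |- _ => destruct z | z : (R * R)%type |- _ => destruct z end;
  csimpl; f_equal; ring.

(* [Cplx] is Coquelicot's [C], and [Cnorm] its [Cmod]. *)
Lemma Cnorm_mul x y : Cnorm (Cmul x y) = Cnorm x * Cnorm y.
Proof. exact (Cmod_mult x y). Qed.
Lemma Cnorm_ge0 x : 0 <= Cnorm x.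
Proof. exact (Cmod_ge_0 x). Qed.
Lemma Cnorm_tri x y : Cnorm (Cadd x y) <= Cnorm x + Cnorm y.
Proof. exact (Cmod_triangle x y). Qed.
Lemma Cnorm_opp x : Cnorm (Copp x) = Cnorm x.
Proof. exact (Cmod_opp x). Qed.
Lemma Cnorm_sub_tri x y : Cnorm (Csub x y) <= Cnorm x + Cnorm y.
Proof. unfold Csub. rewrite <- (Cnorm_opp y). apply Cnorm_tri. Qed.
Lemma Cnorm_fst x : Rabs (fst x) <= Cnorm x.
Proof. exact (re_le_Cmod x). Qed.
Lemma Cnorm_snd x : Rabs (snd x) <= Cnorm x.
Proof.
  pose proof (Rmax_Cmod x) as H. pose proof (Rmax_r (Rabs (fst x)) (Rabs (snd x))).
  change (Cmod x) with (Cnorm x) in H. lra.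
Qed.
Lemma Cnorm_le_sum x : Cnorm x <= Rabs (fst x) + Rabs (snd x).
Proof.
  destruct x as [u v]. unfold Cnorm; cbn [fst snd].
  pose proof (Rabs_pos u); pose proof (Rabs_pos v).
  rewrite <- (sqrt_Rsqr (Rabs u + Rabs v)) by lra.
  apply sqrt_le_1_alt. unfold Rsqr. rewrite <- (pow2_abs u), <- (pow2_abs v). nra.
Qed.
Lemma Cnorm_pair0 r : Cnorm (r, 0) = Rabs r.
Proof. exact (Cmod_R r). Qed.
Lemma Cnorm_scal r x : Cnorm (Cscal r x) = Rabs r * Cnorm x.
Proof. replace (Cscal r x) with (Cmul (r, 0) x) by ceq. rewrite Cnorm_mul, Cnorm_pair0. reflexivity. Qed.
Lemma Cnorm_C0 : Cnorm C0 = 0.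
Proof. unfold C0. rewrite Cnorm_pair0. apply Rabs_R0. Qed.
Lemma Cnorm_Cexp z : Cnorm (Cexp z) = exp (fst z).
Proof.
  unfold Cnorm, Cexp; cbn [fst snd].
  replace ((exp (fst z) * cos (snd z)) ^ 2 + (exp (fst z) * sin (snd z)) ^ 2)
    with (exp (fst z) ^ 2 * (Rsqr (sin (snd z)) + Rsqr (cos (snd z)))) by (unfold Rsqr; ring).
  rewrite sin2_cos2, Rmult_1_r, sqrt_pow2; [reflexivity | left; apply exp_pos].
Qed.

Fixpoint Cpow (z : Cplx) (k : nat) : Cplx :=
  match k with O => C1 | S k' => Cmul z (Cpow z k') end.

Lemma Cnorm_pow z k : Cnorm (Cpow z k) = Cnorm z ^ k.
Proof.
  induction k as [|k IH]; simpl.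
  - unfold C1. rewrite Cnorm_pair0. apply Rabs_R1.
  - rewrite Cnorm_mul, IH. ring.
Qed.

(** * Complex-valued functions of a real variable *)

Definition is_derive_C (g : R -> Cplx) (x : R) (L : Cplx) : Prop :=
  forall eps, 0 < eps -> exists delta, 0 < delta /\
    forall h : R, Rabs h < delta ->
      Cnorm (Csub (Csub (g (x + h)) (g x)) (Cscal h L)) <= eps * Rabs h.

Lemma is_derive_C_components g x L : is_derive_C g x L <->
  derivable_pt_lim (fun t => fst (g t)) x (fst L) /\ derivable_pt_lim (fun t => snd (g t)) x (snd L).
Proof.
  split.
  - intro H. split; intros eps Heps;
      destruct (H (eps / 2)) as [d [Hd P]]; try lra;
      exists (mkposreal d Hd); intros h Hh0 Hh; simpl in Hh; specialize (P h Hh);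
      assert (Hp : 0 < Rabs h) by (apply Rabs_pos_lt; auto).
    + pose proof (Cnorm_fst (Csub (Csub (g (x + h)) (g x)) (Cscal h L))). csimpl.
      replace ((fst (g (x + h)) - fst (g x)) / h - fst L)
        with ((fst (g (x + h)) + - fst (g x) + - (h * fst L)) / h) by (field; auto).
      unfold Rdiv. rewrite Rabs_mult, Rabs_inv.
      apply (Rmult_lt_reg_r (Rabs h)); auto.
      rewrite Rmult_assoc, Rinv_l by lra. nra.
    + pose proof (Cnorm_snd (Csub (Csub (g (x + h)) (g x)) (Cscal h L))). csimpl.
      replace ((snd (g (x + h)) - snd (g x)) / h - snd L)
        with ((snd (g (x + h)) + - snd (g x) + - (h * snd L)) / h) by (field; auto).
      unfold Rdiv. rewrite Rabs_mult, Rabs_inv.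
      apply (Rmult_lt_reg_r (Rabs h)); auto.
      rewrite Rmult_assoc, Rinv_l by lra. nra.
  - intros [H1 H2] eps Heps.
    destruct (H1 (eps / 2)) as [d1 P1]; try lra. destruct (H2 (eps / 2)) as [d2 P2]; try lra.
    exists (Rmin d1 d2). split; [apply Rmin_case; apply cond_pos |].
    intros h Hh. destruct (Req_dec h 0) as [->|Hh0].
    + rewrite Rplus_0_r. replace (Csub (Csub (g x) (g x)) (Cscal 0 L)) with C0 by ceq.
      rewrite Cnorm_C0, Rabs_R0. lra.
    + specialize (P1 h Hh0 ltac:(pose proof (Rmin_l d1 d2); lra)).
      specialize (P2 h Hh0 ltac:(pose proof (Rmin_r d1 d2); lra)).
      eapply Rle_trans; [apply Cnorm_le_sum |]. csimpl.
      assert (Hp : 0 < Rabs h) by (apply Rabs_pos_lt; auto).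
      replace (fst (g (x + h)) + - fst (g x) + - (h * fst L))
        with (((fst (g (x + h)) - fst (g x)) / h - fst L) * h) by (field; auto).
      replace (snd (g (x + h)) + - snd (g x) + - (h * snd L))
        with (((snd (g (x + h)) - snd (g x)) / h - snd L) * h) by (field; auto).
      rewrite !Rabs_mult. nra.
Qed.

Lemma is_derive_C_unique g x L1 L2 : is_derive_C g x L1 -> is_derive_C g x L2 -> L1 = L2.
Proof.
  rewrite !is_derive_C_components. intros [A1 B1] [A2 B2].
  destruct L1, L2; cbn [fst snd] in *. f_equal; eapply uniqueness_limite; eauto.
Qed.

Lemma Rderiv_C_correct g x L : is_derive_C g x L -> Rderiv_C g x = L.
Proof.
  intro H. apply (is_derive_C_unique g x); auto.
  apply (epsilon_spec (inhabits (0, 0)) (is_derive_C g x)). exists L. exact H.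
Qed.

Lemma is_derive_C_ext g1 g2 x L : (forall t, g1 t = g2 t) -> is_derive_C g1 x L -> is_derive_C g2 x L.
Proof.
  intros E H eps He. destruct (H eps He) as [d [Hd P]]. exists d; split; auto.
  intros h Hh. rewrite <- !E. auto.
Qed.
Lemma is_derive_C_val g x L L' : is_derive_C g x L -> L = L' -> is_derive_C g x L'.
Proof. intros; subst; auto. Qed.

Lemma derivable_pt_lim_val f x l l' : derivable_pt_lim f x l -> l = l' -> derivable_pt_lim f x l'.
Proof. intros; subst; auto. Qed.

Lemma is_derive_C_const c x : is_derive_C (fun _ => c) x C0.
Proof. apply is_derive_C_components; split; apply derivable_pt_lim_const. Qed.

Lemma is_derive_C_line u h x : is_derive_C (fun t => Cadd u (Cscal t h)) x h.
Proof. apply is_derive_C_components; csimpl; split; apply is_derive_Reals; auto_derive; auto; ring. Qed.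

Lemma is_derive_C_plus f g x Lf Lg : is_derive_C f x Lf -> is_derive_C g x Lg ->
  is_derive_C (fun t => Cadd (f t) (g t)) x (Cadd Lf Lg).
Proof.
  rewrite !is_derive_C_components. intros [F1 F2] [G1 G2].
  split; [exact (derivable_pt_lim_plus _ _ x _ _ F1 G1) | exact (derivable_pt_lim_plus _ _ x _ _ F2 G2)].
Qed.

Lemma is_derive_C_mult f g x Lf Lg : is_derive_C f x Lf -> is_derive_C g x Lg ->
  is_derive_C (fun t => Cmul (f t) (g t)) x (Cadd (Cmul Lf (g x)) (Cmul (f x) Lg)).
Proof.
  rewrite !is_derive_C_components. intros [F1 F2] [G1 G2]. split.
  - eapply derivable_pt_lim_val.
    + exact (derivable_pt_lim_minus _ _ x _ _ (derivable_pt_lim_mult _ _ x _ _ F1 G1)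
               (derivable_pt_lim_mult _ _ x _ _ F2 G2)).
    + csimpl. ring.
  - eapply derivable_pt_lim_val.
    + exact (derivable_pt_lim_plus _ _ x _ _ (derivable_pt_lim_mult _ _ x _ _ F1 G2)
               (derivable_pt_lim_mult _ _ x _ _ F2 G1)).
    + csimpl. ring.
Qed.

Lemma is_derive_C_scal (r : R -> R) f x lr Lf : derivable_pt_lim r x lr -> is_derive_C f x Lf ->
  is_derive_C (fun t => Cscal (r t) (f t)) x (Cadd (Cscal lr (f x)) (Cscal (r x) Lf)).
Proof.
  rewrite !is_derive_C_components. intros R1 [F1 F2]. split.
  - eapply derivable_pt_lim_val; [exact (derivable_pt_lim_mult _ _ x _ _ R1 F1) | csimpl; ring].
  - eapply derivable_pt_lim_val; [exact (derivable_pt_lim_mult _ _ x _ _ R1 F2) | csimpl; ring].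
Qed.

Lemma is_derive_C_exp f x Lf : is_derive_C f x Lf ->
  is_derive_C (fun t => Cexp (f t)) x (Cmul (Cexp (f x)) Lf).
Proof.
  rewrite !is_derive_C_components. intros [F1 F2].
  pose proof (derivable_pt_lim_comp _ _ x _ _ F1 (derivable_pt_lim_exp (fst (f x)))) as E1.
  pose proof (derivable_pt_lim_comp _ _ x _ _ F2 (derivable_pt_lim_cos (snd (f x)))) as Co.
  pose proof (derivable_pt_lim_comp _ _ x _ _ F2 (derivable_pt_lim_sin (snd (f x)))) as Si.
  unfold comp in *. unfold Cexp. cbn [fst snd]. split.
  - eapply derivable_pt_lim_val; [exact (derivable_pt_lim_mult _ _ x _ _ E1 Co) | csimpl; ring].
  - eapply derivable_pt_lim_val; [exact (derivable_pt_lim_mult _ _ x _ _ E1 Si) | csimpl; ring].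
Qed.

(* The bound [2 B] (rather than [B]) comes from applying the real mean value theorem
   to each component separately. *)
Lemma is_derive_C_lipschitz g g1 a b B : a <= b ->
  (forall t, a <= t <= b -> is_derive_C g t (g1 t)) ->
  (forall t, a <= t <= b -> Cnorm (g1 t) <= B) ->
  Cnorm (Csub (g b) (g a)) <= 2 * B * (b - a).
Proof.
  intros Hab HD HB. destruct (Req_dec a b) as [<-|Hne].
  { replace (Csub (g a) (g a)) with C0 by ceq. rewrite Cnorm_C0. lra. }
  assert (K1 : forall t, a <= t <= b -> derivable_pt_lim (fun t => fst (g t)) t (fst (g1 t)))
    by (intros t Ht; apply is_derive_C_components; auto).
  assert (K2 : forall t, a <= t <= b -> derivable_pt_lim (fun t => snd (g t)) t (snd (g1 t)))
    by (intros t Ht; apply is_derive_C_components; auto).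
  destruct (MVT_cor2 _ _ a b ltac:(lra) K1) as [c1 [M1 Hc1]].
  destruct (MVT_cor2 _ _ a b ltac:(lra) K2) as [c2 [M2 Hc2]].
  eapply Rle_trans; [apply Cnorm_le_sum |]. csimpl.
  replace (fst (g b) + - fst (g a)) with (fst (g1 c1) * (b - a)) by lra.
  replace (snd (g b) + - snd (g a)) with (snd (g1 c2) * (b - a)) by lra.
  rewrite !Rabs_mult, (Rabs_right (b - a)) by lra.
  pose proof (Cnorm_fst (g1 c1)). pose proof (Cnorm_snd (g1 c2)).
  pose proof (HB c1 ltac:(lra)). pose proof (HB c2 ltac:(lra)). nra.
Qed.

Lemma taylor2_R (f f1 f2 : R -> R) a b B : a < b ->
  (forall t, a <= t <= b -> derivable_pt_lim f t (f1 t)) ->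
  (forall t, a <= t <= b -> derivable_pt_lim f1 t (f2 t)) ->
  (forall t, a <= t <= b -> Rabs (f2 t) <= B) ->
  Rabs (f b - f a - (b - a) * f1 a) <= B * (b - a) ^ 2.
Proof.
  intros Hab D1 D2 HB.
  set (psi := fun t => f t - f a - (t - a) * f1 a).
  assert (Dp : forall t, a <= t <= b -> derivable_pt_lim psi t (f1 t - f1 a)).
  { intros t Ht. unfold psi.
    eapply derivable_pt_lim_val.
    - exact (derivable_pt_lim_minus _ _ t _ _
        (derivable_pt_lim_minus _ _ t _ _ (D1 t Ht) (derivable_pt_lim_const (f a) t))
        (derivable_pt_lim_mult _ _ t _ _
           (derivable_pt_lim_minus _ _ t _ _ (derivable_pt_lim_id t) (derivable_pt_lim_const a t))
           (derivable_pt_lim_const (f1 a) t))).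
    - unfold fct_cte, id. ring. }
  destruct (MVT_cor2 _ _ a b Hab Dp) as [c [M Hc]].
  replace (f b - f a - (b - a) * f1 a) with ((f1 c - f1 a) * (b - a)) by (unfold psi in M; lra).
  destruct (MVT_cor2 f1 f2 a c ltac:(lra) ltac:(intros; apply D2; lra)) as [d [M2 Hd]].
  rewrite M2, !Rabs_mult, (Rabs_right (c - a)), (Rabs_right (b - a)) by lra.
  pose proof (HB d ltac:(lra)). pose proof (Rabs_pos (f2 d)).
  replace (B * (b - a) ^ 2) with (B * (b - a) * (b - a)) by ring.
  apply Rmult_le_compat_r; [lra |]. apply Rmult_le_compat; lra.
Qed.

Lemma taylor2_C g g1 g2 a b B : a < b ->
  (forall t, a <= t <= b -> is_derive_C g t (g1 t)) ->
  (forall t, a <= t <= b -> is_derive_C g1 t (g2 t)) ->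
  (forall t, a <= t <= b -> Cnorm (g2 t) <= B) ->
  Cnorm (Csub (Csub (g b) (g a)) (Cscal (b - a) (g1 a))) <= 2 * B * (b - a) ^ 2.
Proof.
  intros Hab D1 D2 HB.
  pose proof (taylor2_R (fun t => fst (g t)) (fun t => fst (g1 t)) (fun t => fst (g2 t)) a b B Hab
    ltac:(intros t Ht; apply is_derive_C_components; auto)
    ltac:(intros t Ht; apply is_derive_C_components; auto)
    ltac:(intros t Ht; eapply Rle_trans; [apply Cnorm_fst | auto])) as T1.
  pose proof (taylor2_R (fun t => snd (g t)) (fun t => snd (g1 t)) (fun t => snd (g2 t)) a b B Hab
    ltac:(intros t Ht; apply is_derive_C_components; auto)
    ltac:(intros t Ht; apply is_derive_C_components; auto)
    ltac:(intros t Ht; eapply Rle_trans; [apply Cnorm_snd | auto])) as T2.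
  eapply Rle_trans; [apply Cnorm_le_sum |]. csimpl. unfold Rminus in *. lra.
Qed.

(** * Complex differentiability along lines *)

Definition line (u h : Cplx) (t : R) : Cplx := Cadd u (Cscal t h).

(* A line-wise form of [f' = f1]; used twice it gives the Taylor bound [holo_taylor]. *)
Definition holo_deriv (f f1 : Cplx -> Cplx) : Prop :=
  forall u h t, is_derive_C (fun t => f (line u h t)) t (Cmul (f1 (line u h t)) h).

Lemma holo_deriv_const c : holo_deriv (fun _ => c) (fun _ => C0).
Proof. intros u h t. eapply is_derive_C_val. apply is_derive_C_const. ceq. Qed.

Lemma holo_deriv_id : holo_deriv (fun z => z) (fun _ => C1).
Proof. intros u h t. eapply is_derive_C_val. apply is_derive_C_line. ceq. Qed.

Lemma holo_deriv_plus f f1 g g1 : holo_deriv f f1 -> holo_deriv g g1 ->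
  holo_deriv (fun z => Cadd (f z) (g z)) (fun z => Cadd (f1 z) (g1 z)).
Proof. intros F G u h t. eapply is_derive_C_val. apply is_derive_C_plus; [apply F|apply G]. ceq. Qed.

Lemma holo_deriv_mult f f1 g g1 : holo_deriv f f1 -> holo_deriv g g1 ->
  holo_deriv (fun z => Cmul (f z) (g z)) (fun z => Cadd (Cmul (f1 z) (g z)) (Cmul (f z) (g1 z))).
Proof. intros F G u h t. eapply is_derive_C_val. apply is_derive_C_mult; [apply F|apply G]. ceq. Qed.

Lemma holo_deriv_scal r f f1 : holo_deriv f f1 -> holo_deriv (fun z => Cscal r (f z)) (fun z => Cscal r (f1 z)).
Proof.
  intros F u h t. eapply is_derive_C_val. apply (is_derive_C_scal (fun _ => r)). apply derivable_pt_lim_const.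
  apply F. ceq.
Qed.

Lemma holo_deriv_exp f f1 : holo_deriv f f1 -> holo_deriv (fun z => Cexp (f z)) (fun z => Cmul (Cexp (f z)) (f1 z)).
Proof. intros F u h t. eapply is_derive_C_val. apply is_derive_C_exp. apply F. ceq. Qed.

Lemma holo_deriv_ext f g f1 g1 : (forall z, f z = g z) -> (forall z, f1 z = g1 z) -> holo_deriv f f1 -> holo_deriv g g1.
Proof.
  intros E E1 F u h t. eapply is_derive_C_ext. intro; apply E. rewrite <- E1. apply F.
Qed.

Lemma holo_deriv_pow k : holo_deriv (fun z => Cpow z k) (fun z => Cscal (INR k) (Cpow z (k - 1))).
Proof.
  induction k.
  - eapply holo_deriv_ext; [| |apply (holo_deriv_const C1)]. reflexivity. intro; simpl; ceq.
  - eapply holo_deriv_ext; [| |apply (holo_deriv_mult _ _ _ _ holo_deriv_id IHk)]. reflexivity.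
    intro z. destruct k.
    + simpl. ceq.
    + replace (S (S k) - 1)%nat with (S k) by lia. replace (S k - 1)%nat with k by lia.
      cbn [Cpow]. rewrite (S_INR (S k)). set (P := Cpow z k). clearbody P. ceq.
Qed.

Definition gauss_mon (k : nat) (A B : R) (z : Cplx) : Cplx :=
  Cmul (Cpow z k) (Cexp (Cadd (Cscal A (Cmul z z)) (Cscal B z))).

(* For [k = 0] the first term has coefficient [0], so the truncated [k - 1] is harmless. *)
Definition gauss_mon_deriv (k : nat) (A B : R) (z : Cplx) : Cplx :=
  Cadd (Cadd (Cscal (INR k) (gauss_mon (k - 1) A B z)) (Cscal (2 * A) (gauss_mon (S k) A B z)))
       (Cscal B (gauss_mon k A B z)).

Lemma holo_deriv_gauss_mon k A B : holo_deriv (gauss_mon k A B) (gauss_mon_deriv k A B).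
Proof.
  assert (Hphi : holo_deriv (fun z => Cadd (Cscal A (Cmul z z)) (Cscal B z))
                    (fun z => Cadd (Cscal A (Cadd (Cmul C1 z) (Cmul z C1))) (Cscal B C1))).
  { apply holo_deriv_plus; apply holo_deriv_scal; [apply holo_deriv_mult |]; apply holo_deriv_id. }
  eapply holo_deriv_ext; [| | apply (holo_deriv_mult _ _ _ _ (holo_deriv_pow k) (holo_deriv_exp _ _ Hphi))].
  reflexivity.
  intro z. unfold gauss_mon_deriv, gauss_mon. simpl Cpow.
  set (E := Cexp (Cadd (Cscal A (Cmul z z)) (Cscal B z))). clearbody E.
  destruct k.
  - simpl. ceq.
  - replace (S k - 1)%nat with k by lia. simpl Cpow. set (P := Cpow z k). clearbody P. ceq.
Qed.

Definition is_Cderiv (f : Cplx -> Cplx) (z L : Cplx) : Prop :=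
  forall eps, 0 < eps -> exists delta, 0 < delta /\
    forall h : Cplx, Cnorm h < delta ->
      Cnorm (Csub (Csub (f (Cadd z h)) (f z)) (Cmul L h)) <= eps * Cnorm h.

Lemma is_Cderiv_real_direction f z L :
  is_Cderiv f z L -> is_derive_C (fun t => f (Cadd z (t, 0))) 0 L.
Proof.
  intros H eps He. destruct (H eps He) as [d [Hd P]]. exists d; split; auto.
  intros h Hh. rewrite Rplus_0_l. replace (Cadd z (0, 0)) with z by ceq.
  replace (Cscal h L) with (Cmul L (h, 0)) by ceq.
  rewrite <- (Cnorm_pair0 h) in *. apply P; auto.
Qed.

Lemma Cderiv_correct f z L : is_Cderiv f z L -> Cderiv f z = L.
Proof.
  intro H. apply (is_derive_C_unique (fun t => f (Cadd z (t, 0))) 0); apply is_Cderiv_real_direction; auto.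
  apply (epsilon_spec (inhabits (0, 0)) (is_Cderiv f z)). exists L. exact H.
Qed.

Lemma line0 u h : line u h 0 = u.
Proof. unfold line. ceq. Qed.
Lemma line1 u h : line u h 1 = Cadd u h.
Proof. unfold line. ceq. Qed.

Lemma holo_taylor f f1 f2 z h B : holo_deriv f f1 -> holo_deriv f1 f2 ->
  (forall t, 0 <= t <= 1 -> Cnorm (f2 (line z h t)) <= B) ->
  Cnorm (Csub (Csub (f (Cadd z h)) (f z)) (Cmul (f1 z) h)) <= 2 * B * Cnorm h ^ 2.
Proof.
  intros F1 F2 HB.
  pose proof (taylor2_C (fun t => f (line z h t)) (fun t => Cmul (f1 (line z h t)) h)
     (fun t => Cmul (Cmul (f2 (line z h t)) h) h) 0 1 (B * Cnorm h ^ 2) Rlt_0_1) as T.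
  cbv beta in T. rewrite line0, line1 in T.
  replace (Cmul (f1 z) h) with (Cscal (1 - 0) (Cmul (f1 z) h)) by ceq.
  replace (2 * B * Cnorm h ^ 2) with (2 * (B * Cnorm h ^ 2) * (1 - 0) ^ 2) by ring.
  apply T.
  - intros; apply F1.
  - intros t _. eapply is_derive_C_val. apply is_derive_C_mult. apply F2. apply is_derive_C_const. ceq.
  - intros t Ht. rewrite !Cnorm_mul. specialize (HB t Ht). pose proof (Cnorm_ge0 h).
    replace (Cnorm h ^ 2) with (Cnorm h * Cnorm h) by ring.
    rewrite Rmult_assoc. apply Rmult_le_compat_r; auto. nra.
Qed.

(** * Polynomial-times-Gaussian bounds *)

Lemma exp_le x y : x <= y -> exp x <= exp y.
Proof. intro H. destruct (Req_dec x y) as [->|]; [lra |]. left; apply exp_increasing; lra. Qed.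

Lemma exp_pow x n : exp x ^ n = exp (INR n * x).
Proof.
  induction n as [|n IH].
  - simpl. rewrite Rmult_0_l, exp_0. ring.
  - rewrite S_INR. simpl. rewrite IH, <- exp_plus. f_equal. ring.
Qed.

(* From [v / N <= exp (v / N)]. *)
Lemma pow_le_exp N v : 0 <= v -> v ^ N <= INR N ^ N * exp v.
Proof.
  intro Hv. destruct N as [|N].
  { simpl. pose proof (exp_ineq1_le v). lra. }
  set (n := INR (S N)). assert (Hn : 0 < n) by (unfold n; apply lt_0_INR; lia).
  assert (H1 : (v / n) ^ S N <= exp (v / n) ^ S N).
  { apply pow_incr. split; [apply Rdiv_le_0_compat; lra |]. pose proof (exp_ineq1_le (v / n)). lra. }
  rewrite exp_pow in H1. fold n in H1. replace (n * (v / n)) with v in H1 by (field; lra).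
  replace (v ^ S N) with (n ^ S N * (v / n) ^ S N) by (rewrite <- Rpow_mult_distr; f_equal; field; lra).
  apply Rmult_le_compat_l; auto. apply pow_le; lra.
Qed.

Lemma pow_mul_exp_neg_le N c v : 0 < c -> 0 <= v -> v ^ N * exp (- (c * v)) <= (INR N / c) ^ N.
Proof.
  intros Hc Hv. pose proof (pow_le_exp N (c * v) ltac:(nra)) as P.
  assert (Hcn : 0 < c ^ N) by (apply pow_lt; lra).
  rewrite Rpow_mult_distr in P.
  unfold Rdiv. rewrite Rpow_mult_distr, pow_inv, exp_Ropp.
  apply (Rmult_le_reg_r (c ^ N * exp (c * v))); [pose proof (exp_pos (c * v)); nra |].
  replace (v ^ N * / exp (c * v) * (c ^ N * exp (c * v))) with (c ^ N * v ^ N)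
    by (field; apply Rgt_not_eq, exp_pos).
  replace (INR N ^ N * / c ^ N * (c ^ N * exp (c * v))) with (INR N ^ N * exp (c * v)) by (field; lra).
  exact P.
Qed.

Lemma poly_gauss_bound N A c : 0 < c -> exists C, 0 < C /\ forall y, 0 <= y ->
  (1 + y) ^ N * exp (A * y - c * y ^ 2) <= C.
Proof.
  intro Hc.
  set (K := 2 ^ N * (INR N / (c / 2)) ^ N * exp (c / 2) * exp (A ^ 2 / (2 * c))).
  assert (HK : 0 <= K).
  { unfold K. pose proof (exp_pos (c / 2)). pose proof (exp_pos (A ^ 2 / (2 * c))).
    assert (0 <= INR N / (c / 2)) by (apply Rdiv_le_0_compat; [apply pos_INR | lra]).
    assert (0 <= 2 ^ N) by (apply pow_le; lra). assert (0 <= (INR N / (c / 2)) ^ N) by (apply pow_le; lra).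
    repeat apply Rmult_le_pos; lra. }
  exists (K + 1). split; [lra |]. intros y Hy.
  set (v := 1 + y ^ 2).
  assert (E1 : (1 + y) ^ N <= 2 ^ N * v ^ N).
  { rewrite <- Rpow_mult_distr. apply pow_incr. unfold v. nra. }
  (* completing the square *)
  assert (E2 : exp (A * y - c * y ^ 2) <= exp (A ^ 2 / (2 * c)) * exp (c / 2) * exp (- (c / 2 * v))).
  { rewrite <- !exp_plus. apply exp_le. unfold v.
    assert (A * y <= c / 2 * y ^ 2 + A ^ 2 / (2 * c)).
    { apply (Rmult_le_reg_l (2 * c)); [lra |].
      replace (2 * c * (c / 2 * y ^ 2 + A ^ 2 / (2 * c))) with (c ^ 2 * y ^ 2 + A ^ 2) by (field; lra).
      pose proof (pow2_ge_0 (c * y - A)). nra. }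
    nra. }
  assert (E3 := pow_mul_exp_neg_le N (c / 2) v ltac:(lra) ltac:(unfold v; nra)).
  assert (0 <= v ^ N) by (apply pow_le; unfold v; nra).
  assert (0 <= (1 + y) ^ N) by (apply pow_le; lra).
  pose proof (exp_pos (c / 2)). pose proof (exp_pos (A ^ 2 / (2 * c))). pose proof (exp_pos (- (c / 2 * v))).
  apply Rle_trans with (2 ^ N * v ^ N * (exp (A ^ 2 / (2 * c)) * exp (c / 2) * exp (- (c / 2 * v)))).
  { apply Rmult_le_compat; auto. left; apply exp_pos. }
  replace (2 ^ N * v ^ N * (exp (A ^ 2 / (2 * c)) * exp (c / 2) * exp (- (c / 2 * v))))
    with (2 ^ N * (v ^ N * exp (- (c / 2 * v))) * exp (c / 2) * exp (A ^ 2 / (2 * c))) by ring.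
  enough (2 ^ N * (v ^ N * exp (- (c / 2 * v))) * exp (c / 2) * exp (A ^ 2 / (2 * c)) <= K) by lra.
  unfold K. repeat apply Rmult_le_compat_r; try lra.
  apply Rmult_le_compat_l; [apply pow_le; lra | exact E3].
Qed.

Lemma poly_gauss_decay N A c : 0 < c -> exists C, 0 < C /\ forall X,
  (1 + Rabs X) ^ N * exp (A * Rabs X - c * X ^ 2) <= C / (1 + X ^ 2).
Proof.
  intro Hc. destruct (poly_gauss_bound (N + 2) A c Hc) as [C [HC P]].
  exists C; split; auto. intro X.
  specialize (P (Rabs X) (Rabs_pos X)). rewrite pow2_abs, pow_add in P.
  assert (H1 : 0 < 1 + X ^ 2) by nra.
  apply (Rmult_le_reg_r (1 + X ^ 2)); auto.
  unfold Rdiv. rewrite (Rmult_assoc C), Rinv_l, Rmult_1_r by lra.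
  eapply Rle_trans; [| apply P].
  assert (1 + X ^ 2 <= (1 + Rabs X) ^ 2) by (rewrite <- (pow2_abs X); pose proof (Rabs_pos X); nra).
  pose proof (exp_pos (A * Rabs X - c * X ^ 2)).
  assert (0 <= (1 + Rabs X) ^ N) by (apply pow_le; pose proof (Rabs_pos X); lra).
  replace ((1 + Rabs X) ^ N * (1 + Rabs X) ^ 2 * exp (A * Rabs X - c * X ^ 2))
    with ((1 + Rabs X) ^ N * exp (A * Rabs X - c * X ^ 2) * (1 + Rabs X) ^ 2) by ring.
  apply Rmult_le_compat_l; auto. apply Rmult_le_pos; lra.
Qed.

Lemma Cnorm_gauss_mon k A B u : Cnorm (gauss_mon k A B u) =
  Cnorm u ^ k * exp (A * (fst u ^ 2 - snd u ^ 2) + B * fst u).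
Proof.
  unfold gauss_mon. rewrite Cnorm_mul, Cnorm_pow, Cnorm_Cexp. do 2 f_equal.
  destruct u; csimpl. ring.
Qed.

(** * Finite sums of monomials *)

Fixpoint sumC {A} (F : A -> Cplx) (L : list A) : Cplx :=
  match L with nil => C0 | x :: L' => Cadd (F x) (sumC F L') end.

Lemma sumC_app {A} (F : A -> Cplx) l1 l2 : sumC F (l1 ++ l2) = Cadd (sumC F l1) (sumC F l2).
Proof.
  induction l1 as [|x l1 IH]; simpl.
  - generalize (sumC F l2); intro; ceq.
  - rewrite IH. generalize (sumC F l1) (sumC F l2) (F x); intros; ceq.
Qed.

Lemma sumC_flat_map {A B} (F : B -> Cplx) (g : A -> list B) L :
  sumC F (flat_map g L) = sumC (fun m => sumC F (g m)) L.
Proof. induction L as [|x L IH]; simpl; auto. rewrite sumC_app, IH. reflexivity. Qed.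

Lemma holo_deriv_sum {A} (F F1 : A -> Cplx -> Cplx) L :
  (forall x, holo_deriv (F x) (F1 x)) ->
  holo_deriv (fun z => sumC (fun m => F m z) L) (fun z => sumC (fun m => F1 m z) L).
Proof.
  intro H. induction L; simpl; [apply holo_deriv_const | apply holo_deriv_plus; auto].
Qed.

Lemma holo_deriv_sum_flat_map {A} (F : A -> Cplx -> Cplx) (d : A -> list A) L :
  (forall m, holo_deriv (F m) (fun z => sumC (fun m' => F m' z) (d m))) ->
  holo_deriv (fun z => sumC (fun m => F m z) L) (fun z => sumC (fun m => F m z) (flat_map d L)).
Proof.
  intro H. eapply holo_deriv_ext; [intro; reflexivity | intro; symmetry; apply sumC_flat_map |].
  apply (holo_deriv_sum F (fun m z => sumC (fun m' => F m' z) (d m))). exact H.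
Qed.

Lemma sumC_uniform_bound {A X} (F : A -> X -> Cplx) (G : X -> R) (D : X -> Prop) L :
  (forall x, D x -> 0 <= G x) ->
  (forall m, In m L -> exists C, 0 < C /\ forall x, D x -> Cnorm (F m x) <= C * G x) ->
  exists C, 0 < C /\ forall x, D x -> Cnorm (sumC (fun m => F m x) L) <= C * G x.
Proof.
  intros HG HF. induction L as [|m L IH]; simpl.
  - exists 1. split; [lra |]. intros x Hx. rewrite Cnorm_C0. specialize (HG x Hx). lra.
  - destruct IH as [C2 [HC2 P2]]; [intros m' Hm'; apply HF; right; exact Hm' |].
    destruct (HF m (or_introl eq_refl)) as [C1 [HC1 P1]].
    exists (C1 + C2). split; [lra |]. intros x Hx.
    eapply Rle_trans; [apply Cnorm_tri |]. specialize (P1 x Hx). specialize (P2 x Hx). lra.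
Qed.

(** * The heat kernel and the symbol as sums of monomials *)

Definition heat_const (s : R) : R := / sqrt (4 * PI * s).

(* A triple [(r, n, k)] encodes [r s^-n (4 pi s)^-1/2 u^k exp (- u^2 / (4 s) + a u)]; the kernel
   [K_a a s] is [(1, 0, 0)] and [heat_mon_deriv] lists the [u]-derivative of a monomial. *)
Definition heat_mon (a : R) (m : R * nat * nat) (s : R) (u : Cplx) : Cplx :=
  let '(r, n, k) := m in Cscal (r * / s ^ n * heat_const s) (gauss_mon k (- / (4 * s)) a u).
Definition heat_sum a L s u := sumC (fun m => heat_mon a m s u) L.
Definition heat_mon_deriv (a : R) (m : R * nat * nat) : list (R * nat * nat) :=
  let '(r, n, k) := m in
  match k with
  | O => (- r / 2, S n, 1%nat) :: (r * a, n, 0%nat) :: nil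
  | S k' => (r * INR (S k'), n, k') :: (- r / 2, S n, S (S k')) :: (r * a, n, S k') :: nil
  end.
Definition heat_derivs a n := Nat.iter n (flat_map (heat_mon_deriv a)) ((1, 0%nat, 0%nat) :: nil).

(* A triple [(c, j, k)] encodes [c t^j q^k exp (- t q^2)]; [sym_derivs beta] is
   [d_q^beta (q^2 exp (- t q^2))], which is also its [xi]-derivative for [q = xi + i a]. *)
Definition sym_mon (m : R * nat * nat) (t : R) (q : Cplx) : Cplx :=
  let '(c, j, k) := m in Cscal (c * t ^ j) (gauss_mon k (- t) 0 q).
Definition sym_sum L t q := sumC (fun m => sym_mon m t q) L.
Definition sym_mon_deriv (m : R * nat * nat) : list (R * nat * nat) :=
  let '(c, j, k) := m in
  match k with
  | O => (-2 * c, S j, 1%nat) :: nil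
  | S k' => (c * INR (S k'), j, k') :: (-2 * c, S j, S (S k')) :: nil
  end.
Definition sym_derivs n := Nat.iter n (flat_map sym_mon_deriv) ((1, 0%nat, 2%nat) :: nil).

Lemma holo_deriv_heat_mon a m s : s <> 0 ->
  holo_deriv (heat_mon a m s) (heat_sum a (heat_mon_deriv a m) s).
Proof.
  intro Hs. destruct m as [[r n] k].
  eapply holo_deriv_ext; [reflexivity | | apply holo_deriv_scal, holo_deriv_gauss_mon].
  intro u. unfold heat_sum, heat_mon_deriv, gauss_mon_deriv, heat_mon. destruct k as [|k].
  - simpl sumC. generalize (gauss_mon (0 - 1) (- / (4 * s)) a u) (gauss_mon 1 (- / (4 * s)) a u)
      (gauss_mon 0 (- / (4 * s)) a u).
    intros [] [] []. csimpl. simpl pow. simpl INR.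
    f_equal; field; repeat split; try apply pow_nonzero; auto.
  - rewrite !S_INR. simpl sumC. replace (S k - 1)%nat with k by lia.
    generalize (gauss_mon k (- / (4 * s)) a u) (gauss_mon (S (S k)) (- / (4 * s)) a u)
      (gauss_mon (S k) (- / (4 * s)) a u).
    intros [] [] []. csimpl. simpl pow.
    f_equal; field; repeat split; try apply pow_nonzero; auto.
Qed.

Lemma holo_deriv_heat_derivs a n s : s <> 0 ->
  holo_deriv (heat_sum a (heat_derivs a n) s) (heat_sum a (heat_derivs a (S n)) s).
Proof.
  intro Hs. exact (holo_deriv_sum_flat_map (fun m => heat_mon a m s) _ (heat_derivs a n)
    (fun m => holo_deriv_heat_mon a m s Hs)).
Qed.

Lemma holo_deriv_sym_mon m t : holo_deriv (sym_mon m t) (sym_sum (sym_mon_deriv m) t).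
Proof.
  destruct m as [[c j] k].
  eapply holo_deriv_ext; [reflexivity | | apply holo_deriv_scal, holo_deriv_gauss_mon].
  intro u. unfold sym_sum, sym_mon_deriv, gauss_mon_deriv, sym_mon. destruct k as [|k].
  - simpl sumC. generalize (gauss_mon (0 - 1) (- t) 0 u) (gauss_mon 1 (- t) 0 u) (gauss_mon 0 (- t) 0 u).
    intros [] [] []. csimpl. simpl pow. simpl INR. f_equal; ring.
  - rewrite !S_INR. simpl sumC. replace (S k - 1)%nat with k by lia.
    generalize (gauss_mon k (- t) 0 u) (gauss_mon (S (S k)) (- t) 0 u) (gauss_mon (S k) (- t) 0 u).
    intros [] [] []. csimpl. simpl pow. f_equal; ring.
Qed.

Lemma holo_deriv_sym_derivs n t : holo_deriv (sym_sum (sym_derivs n) t) (sym_sum (sym_derivs (S n)) t).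
Proof. exact (holo_deriv_sum_flat_map (fun m => sym_mon m t) _ (sym_derivs n) (fun m => holo_deriv_sym_mon m t)). Qed.

Definition sym_balanced (beta : nat) (m : R * nat * nat) : Prop :=
  let '(c, j, k) := m in (k + beta = 2 + 2 * j)%nat.

Lemma sym_derivs_balanced beta m : In m (sym_derivs beta) -> sym_balanced beta m.
Proof.
  revert m. induction beta as [|beta IH]; intros m Hm.
  - destruct Hm as [<-|[]]. simpl. lia.
  - apply in_flat_map in Hm. destruct Hm as [[[c j] k] [H0 H1]].
    specialize (IH _ H0). simpl in IH.
    destruct k as [|k]; simpl in H1.
    + destruct H1 as [<-|[]]. simpl. lia.
    + destruct H1 as [<-|[<-|[]]]; simpl; lia.
Qed.

(** * Bounds on the monomials *)

Lemma Cnorm_strip u b : 0 <= b -> Rabs (snd u) <= b -> Cnorm u <= (1 + b) * (1 + Rabs (fst u)).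
Proof. intros Hb Hu. eapply Rle_trans; [apply Cnorm_le_sum |]. pose proof (Rabs_pos (fst u)). nra. Qed.

Lemma heat_const_pos s : 0 < s -> 0 < heat_const s.
Proof. intro. unfold heat_const. apply Rinv_0_lt_compat, sqrt_lt_R0. pose proof PI_RGT_0. nra. Qed.

Lemma heat_const_le s t0 : 0 < t0 -> t0 <= s -> heat_const s <= heat_const t0.
Proof.
  intros. pose proof PI_RGT_0. unfold heat_const.
  apply Rinv_le_contravar; [apply sqrt_lt_R0; nra | apply sqrt_le_1_alt; nra].
Qed.

Lemma heat_exponent_le a s t0 t1 b X Y : 0 < t0 -> t0 <= s <= t1 -> Rabs Y <= b ->
  - / (4 * s) * (X ^ 2 - Y ^ 2) + a * X <= b ^ 2 / (4 * t0) + (Rabs a * Rabs X - / (4 * t1) * X ^ 2).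
Proof.
  intros H0 Hs HY.
  assert (Y ^ 2 <= b ^ 2) by (rewrite <- (pow2_abs Y); pose proof (Rabs_pos Y); nra).
  assert (/ (4 * s) <= / (4 * t0)) by (apply Rinv_le_contravar; lra).
  assert (/ (4 * t1) <= / (4 * s)) by (apply Rinv_le_contravar; lra).
  assert (0 < / (4 * s)) by (apply Rinv_0_lt_compat; lra).
  assert (a * X <= Rabs a * Rabs X) by (rewrite <- Rabs_mult; apply Rle_abs).
  assert (0 <= X ^ 2) by nra. assert (0 <= Y ^ 2) by nra.
  unfold Rdiv. nra.
Qed.

Lemma heat_mon_bound a t0 t1 b m : 0 < t0 -> t0 <= t1 -> 0 <= b ->
  exists C, 0 < C /\ forall s u, t0 <= s <= t1 -> Rabs (snd u) <= b ->
    Cnorm (heat_mon a m s u) <= C * / (1 + fst u ^ 2).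
Proof.
  intros H0 H1 Hb. destruct m as [[r n] k].
  destruct (poly_gauss_decay k (Rabs a) (/ (4 * t1)) ltac:(apply Rinv_0_lt_compat; lra)) as [Cg [HCg PG]].
  set (Kc := Rabs r * / t0 ^ n * heat_const t0 * (1 + b) ^ k * exp (b ^ 2 / (4 * t0))).
  assert (Ht0n : 0 < / t0 ^ n) by (apply Rinv_0_lt_compat, pow_lt; lra).
  pose proof (heat_const_pos t0 H0). pose proof (Rabs_pos r).
  assert (H1b : 0 <= (1 + b) ^ k) by (apply pow_le; lra).
  assert (HKc : 0 <= Kc) by (unfold Kc; pose proof (exp_pos (b ^ 2 / (4 * t0))); repeat apply Rmult_le_pos; lra).
  exists (Kc * Cg + 1). split; [nra |]. intros s u Hs Hu.
  unfold heat_mon. rewrite Cnorm_scal, Cnorm_gauss_mon.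
  set (X := fst u). set (Y := snd u). fold Y in Hu.
  assert (Hcoef : Rabs (r * / s ^ n * heat_const s) <= Rabs r * / t0 ^ n * heat_const t0).
  { rewrite !Rabs_mult, (Rabs_right (heat_const s)), (Rabs_right (/ s ^ n))
      by (left; first [apply heat_const_pos | apply Rinv_0_lt_compat, pow_lt]; lra).
    apply Rmult_le_compat; [| left; apply heat_const_pos; lra | | apply heat_const_le; lra].
    - apply Rmult_le_pos; [apply Rabs_pos | left; apply Rinv_0_lt_compat, pow_lt; lra].
    - apply Rmult_le_compat_l; [apply Rabs_pos |].
      apply Rinv_le_contravar; [apply pow_lt; lra | apply pow_incr; lra]. }
  assert (Hu2 : Cnorm u ^ k <= (1 + b) ^ k * (1 + Rabs X) ^ k).
  { rewrite <- Rpow_mult_distr. apply pow_incr. split; [apply Cnorm_ge0 | apply Cnorm_strip; auto]. }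
  assert (Hex : exp (- / (4 * s) * (X ^ 2 - Y ^ 2) + a * X) <=
                exp (b ^ 2 / (4 * t0)) * exp (Rabs a * Rabs X - / (4 * t1) * X ^ 2)).
  { rewrite <- exp_plus. apply exp_le. eapply heat_exponent_le; eauto. }
  specialize (PG X).
  assert (0 < 1 + X ^ 2) by nra.
  assert (0 <= (1 + Rabs X) ^ k) by (apply pow_le; pose proof (Rabs_pos X); lra).
  assert (0 <= Cnorm u ^ k) by (apply pow_le, Cnorm_ge0).
  pose proof (exp_pos (- / (4 * s) * (X ^ 2 - Y ^ 2) + a * X)).
  pose proof (exp_pos (Rabs a * Rabs X - / (4 * t1) * X ^ 2)).
  apply Rle_trans with (Kc * ((1 + Rabs X) ^ k * exp (Rabs a * Rabs X - / (4 * t1) * X ^ 2))).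
  { replace (Kc * ((1 + Rabs X) ^ k * exp (Rabs a * Rabs X - / (4 * t1) * X ^ 2))) with
      (Rabs r * / t0 ^ n * heat_const t0 * ((1 + b) ^ k * (1 + Rabs X) ^ k) *
        (exp (b ^ 2 / (4 * t0)) * exp (Rabs a * Rabs X - / (4 * t1) * X ^ 2))) by (unfold Kc; ring).
    rewrite <- Rmult_assoc.
    apply Rmult_le_compat; [apply Rmult_le_pos; [apply Rabs_pos | lra] | lra | | exact Hex].
    apply Rmult_le_compat; [apply Rabs_pos | lra | exact Hcoef | exact Hu2]. }
  apply Rle_trans with (Kc * (Cg / (1 + X ^ 2))); [apply Rmult_le_compat_l; auto |].
  unfold Rdiv. rewrite <- Rmult_assoc. apply Rmult_le_compat_r; [left; apply Rinv_0_lt_compat |]; lra.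
Qed.

Lemma heat_sum_bound a t0 t1 b L : 0 < t0 -> t0 <= t1 -> 0 <= b ->
  exists C, 0 < C /\ forall s u, t0 <= s <= t1 -> Rabs (snd u) <= b ->
    Cnorm (heat_sum a L s u) <= C / (1 + fst u ^ 2).
Proof.
  intros H0 H1 Hb.
  destruct (sumC_uniform_bound (fun m (p : R * Cplx) => heat_mon a m (fst p) (snd p))
              (fun p => / (1 + fst (snd p) ^ 2))
              (fun p => t0 <= fst p <= t1 /\ Rabs (snd (snd p)) <= b) L) as [C [HC P]].
  - intros p _. left; apply Rinv_0_lt_compat. pose proof (pow2_ge_0 (fst (snd p))). lra.
  - intros m _. destruct (heat_mon_bound a t0 t1 b m H0 H1 Hb) as [C [HC P]].
    exists C. split; auto. intros [s u] [Hs Hu]. apply P; auto.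
  - exists C. split; auto. intros s u Hs Hu. exact (P (s, u) (conj Hs Hu)).
Qed.

Lemma sym_mon_local_bound a T m Rr : 0 <= T -> 0 <= Rr -> exists B, 0 < B /\
  forall t xi, 0 <= t <= T -> Rabs xi <= Rr -> Cnorm (sym_mon m t (xi, a)) <= B.
Proof.
  intros HT HR. destruct m as [[c j] k].
  set (B := Rabs c * T ^ j * ((Rr + Rabs a) ^ k * exp (T * a ^ 2))).
  assert (HB : 0 <= B).
  { unfold B. pose proof (Rabs_pos c). pose proof (Rabs_pos a). pose proof (exp_pos (T * a ^ 2)).
    assert (0 <= T ^ j) by (apply pow_le; lra). assert (0 <= (Rr + Rabs a) ^ k) by (apply pow_le; lra).
    repeat apply Rmult_le_pos; lra. }
  exists (B + 1). split; [lra |]. intros t xi Ht Hx.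
  unfold sym_mon. rewrite Cnorm_scal, Cnorm_gauss_mon. cbn [fst snd].
  enough (Rabs (c * t ^ j) * (Cnorm (xi, a) ^ k * exp (- t * (xi ^ 2 - a ^ 2) + 0 * xi)) <= B) by lra.
  pose proof (pow2_ge_0 xi). pose proof (pow2_ge_0 a).
  apply Rmult_le_compat; [apply Rabs_pos | apply Rmult_le_pos; [apply pow_le, Cnorm_ge0 | left; apply exp_pos] | |].
  - rewrite Rabs_mult, (Rabs_right (t ^ j)) by (apply Rle_ge, pow_le; lra).
    apply Rmult_le_compat_l; [apply Rabs_pos | apply pow_incr; lra].
  - apply Rmult_le_compat; [apply pow_le, Cnorm_ge0 | left; apply exp_pos | |].
    + apply pow_incr. split; [apply Cnorm_ge0 |].
      eapply Rle_trans; [apply Cnorm_le_sum | simpl; lra].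
    + apply exp_le. assert (t * a ^ 2 <= T * a ^ 2) by (apply Rmult_le_compat_r; lra). nra.
Qed.

Lemma sym_sum_local_bound a T L Rr : 0 <= T -> 0 <= Rr -> exists B, 0 < B /\
  forall t xi, 0 <= t <= T -> Rabs xi <= Rr -> Cnorm (sym_sum L t (xi, a)) <= B.
Proof.
  intros HT HR.
  destruct (sumC_uniform_bound (fun m (p : R * R) => sym_mon m (fst p) (snd p, a)) (fun _ => 1)
              (fun p => 0 <= fst p <= T /\ Rabs (snd p) <= Rr) L) as [B [HB P]].
  - intros; lra.
  - intros m _. destruct (sym_mon_local_bound a T m Rr HT HR) as [B [HB P]].
    exists B. split; auto. intros [t xi] [Ht Hx]. rewrite Rmult_1_r. apply P; auto.
  - exists B. split; auto. intros t xi Ht Hx. rewrite <- (Rmult_1_r B). exact (P (t, xi) (conj Ht Hx)).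
Qed.

Lemma japan_pos xi : 0 < japan xi.
Proof. unfold japan. apply sqrt_lt_R0. nra. Qed.

Lemma japan_le_2 xi : Rabs xi <= 1 -> japan xi <= 2.
Proof.
  intro H. unfold japan. rewrite <- (sqrt_pow2 2) by lra.
  apply sqrt_le_1_alt. rewrite <- (pow2_abs xi). pose proof (Rabs_pos xi). nra.
Qed.

Lemma japan_le_2abs xi : 1 <= Rabs xi -> japan xi <= 2 * Rabs xi.
Proof.
  intro H. unfold japan. rewrite <- (sqrt_pow2 (2 * Rabs xi)) by lra.
  apply sqrt_le_1_alt. rewrite <- (pow2_abs xi). nra.
Qed.

(* The [s]-integrable majorant of [d_xi^beta (q^2 e^{-t q^2})]. *)
Definition sym_weight (beta : nat) (t xi : R) : R :=
  / japan xi ^ beta * (1 + xi ^ 2 * exp (- (t * xi ^ 2) / 2)).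

Lemma sym_weight_pos beta t xi : 0 < sym_weight beta t xi.
Proof.
  unfold sym_weight. apply Rmult_lt_0_compat; [apply Rinv_0_lt_compat, pow_lt, japan_pos |].
  pose proof (exp_pos (- (t * xi ^ 2) / 2)). nra.
Qed.

Lemma Cnorm_sym_mon_le c j k T t xi a : 0 <= t <= T ->
  Cnorm (sym_mon (c, j, k) t (xi, a)) <=
    Rabs c * exp (T * a ^ 2) * (t ^ j * (Rabs xi + Rabs a) ^ k * exp (- (t * xi ^ 2))).
Proof.
  intro Ht. unfold sym_mon. rewrite Cnorm_scal, Cnorm_gauss_mon. cbn [fst snd].
  rewrite Rabs_mult, (Rabs_right (t ^ j)) by (apply Rle_ge, pow_le; lra).
  assert (Hq : Cnorm (xi, a) ^ k <= (Rabs xi + Rabs a) ^ k).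
  { apply pow_incr. split; [apply Cnorm_ge0 | eapply Rle_trans; [apply Cnorm_le_sum | simpl; lra]]. }
  assert (He : exp (- t * (xi ^ 2 - a ^ 2) + 0 * xi) <= exp (T * a ^ 2) * exp (- (t * xi ^ 2))).
  { rewrite <- exp_plus. apply exp_le. pose proof (pow2_ge_0 a).
    assert (t * a ^ 2 <= T * a ^ 2) by (apply Rmult_le_compat_r; lra). lra. }
  assert (0 <= t ^ j) by (apply pow_le; lra). pose proof (Rabs_pos c).
  assert (0 <= Cnorm (xi, a) ^ k) by (apply pow_le, Cnorm_ge0).
  pose proof (exp_pos (- t * (xi ^ 2 - a ^ 2) + 0 * xi)).
  replace (Rabs c * exp (T * a ^ 2) * (t ^ j * (Rabs xi + Rabs a) ^ k * exp (- (t * xi ^ 2))))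
    with (Rabs c * t ^ j * ((Rabs xi + Rabs a) ^ k * (exp (T * a ^ 2) * exp (- (t * xi ^ 2))))) by ring.
  apply Rmult_le_compat_l; [apply Rmult_le_pos; lra |]. apply Rmult_le_compat; auto; lra.
Qed.

Lemma sym_profile_small j k beta T t xi a : 0 <= t <= T -> Rabs xi <= 1 ->
  t ^ j * (Rabs xi + Rabs a) ^ k * exp (- (t * xi ^ 2)) <=
    T ^ j * (1 + Rabs a) ^ k * 2 ^ beta * / japan xi ^ beta.
Proof.
  intros Ht Hx. pose proof (Rabs_pos a). pose proof (Rabs_pos xi). pose proof (japan_pos xi).
  assert (Hj : 1 <= 2 ^ beta * / japan xi ^ beta).
  { assert (japan xi ^ beta <= 2 ^ beta) by (apply pow_incr; split; [lra | apply japan_le_2; auto]).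
    assert (0 < japan xi ^ beta) by (apply pow_lt; auto).
    apply (Rmult_le_reg_r (japan xi ^ beta)); auto.
    rewrite Rmult_assoc, Rinv_l, Rmult_1_l, Rmult_1_r by lra. lra. }
  assert (Htj : t ^ j <= T ^ j) by (apply pow_incr; lra).
  assert (Hq : (Rabs xi + Rabs a) ^ k <= (1 + Rabs a) ^ k) by (apply pow_incr; lra).
  assert (He : exp (- (t * xi ^ 2)) <= 1) by (rewrite <- exp_0; apply exp_le; nra).
  assert (0 <= t ^ j) by (apply pow_le; lra). assert (0 <= (Rabs xi + Rabs a) ^ k) by (apply pow_le; lra).
  assert (0 <= T ^ j * (1 + Rabs a) ^ k) by (apply Rmult_le_pos; apply pow_le; lra).
  pose proof (exp_pos (- (t * xi ^ 2))).
  apply Rle_trans with (T ^ j * (1 + Rabs a) ^ k * 1).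
  - apply Rmult_le_compat; [apply Rmult_le_pos; auto | lra | apply Rmult_le_compat; auto | exact He].
  - replace (T ^ j * (1 + Rabs a) ^ k * 2 ^ beta * / japan xi ^ beta)
      with (T ^ j * (1 + Rabs a) ^ k * (2 ^ beta * / japan xi ^ beta)) by ring.
    apply Rmult_le_compat_l; auto.
Qed.

(* Uses [k + beta = 2 + 2 j]: the powers of [xi] combine into [xi^2 (t xi^2)^j / |xi|^beta], and
   [(t xi^2)^j] is absorbed by half of the Gaussian. *)
Lemma sym_profile_large j k beta t xi a : 0 <= t -> 1 <= Rabs xi -> (k + beta = 2 + 2 * j)%nat ->
  t ^ j * (Rabs xi + Rabs a) ^ k * exp (- (t * xi ^ 2)) <=
    (1 + Rabs a) ^ k * (2 * INR j) ^ j * 2 ^ beta * (xi ^ 2 * exp (- (t * xi ^ 2) / 2)) * / japan xi ^ beta.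
Proof.
  intros Ht Hx Hk. set (X := Rabs xi). set (v := t * xi ^ 2).
  pose proof (Rabs_pos a). pose proof (japan_pos xi).
  assert (Hv : 0 <= v) by (unfold v; pose proof (pow2_ge_0 xi); nra).
  assert (HXb : 0 < X ^ beta) by (apply pow_lt; unfold X; lra).
  assert (HA : (X + Rabs a) ^ k <= (1 + Rabs a) ^ k * X ^ k).
  { rewrite <- Rpow_mult_distr. apply pow_incr. unfold X in *. nra. }
  assert (Hid : t ^ j * X ^ k = xi ^ 2 * v ^ j * / X ^ beta).
  { apply (Rmult_eq_reg_r (X ^ beta)); [| lra]. rewrite Rmult_assoc, <- pow_add.
    rewrite Rmult_assoc, Rinv_l, Rmult_1_r by lra.
    rewrite Hk, pow_add, pow_mult. unfold X, v. rewrite pow2_abs, Rpow_mult_distr. ring. }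
  assert (Hpe : v ^ j * exp (- (/ 2 * v)) <= (2 * INR j) ^ j).
  { replace (2 * INR j) with (INR j / / 2) by (field; lra). apply pow_mul_exp_neg_le; lra. }
  assert (Hjb : / X ^ beta <= 2 ^ beta * / japan xi ^ beta).
  { assert (japan xi ^ beta <= (2 * X) ^ beta) by (apply pow_incr; split; [lra | apply japan_le_2abs; auto]).
    rewrite Rpow_mult_distr in H1. assert (0 < japan xi ^ beta) by (apply pow_lt; auto).
    apply (Rmult_le_reg_r (japan xi ^ beta * X ^ beta)); [nra |].
    replace (/ X ^ beta * (japan xi ^ beta * X ^ beta)) with (japan xi ^ beta) by (field; lra).
    replace (2 ^ beta * / japan xi ^ beta * (japan xi ^ beta * X ^ beta)) with (2 ^ beta * X ^ beta)
      by (field; lra). lra. }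
  assert (Hsplit : exp (- v) = exp (- (/ 2 * v)) * exp (- v / 2)).
  { rewrite <- exp_plus. f_equal. field. }
  fold X v. rewrite Hsplit.
  assert (0 <= v ^ j) by (apply pow_le; lra). assert (0 <= t ^ j) by (apply pow_le; lra).
  pose proof (exp_pos (- (/ 2 * v))). pose proof (exp_pos (- v / 2)). pose proof (pow2_ge_0 xi).
  assert (0 <= X ^ k) by (apply pow_le; unfold X; lra).
  apply Rle_trans with ((1 + Rabs a) ^ k * (t ^ j * X ^ k) * (exp (- (/ 2 * v)) * exp (- v / 2))).
  { replace ((1 + Rabs a) ^ k * (t ^ j * X ^ k) * (exp (- (/ 2 * v)) * exp (- v / 2)))
      with (t ^ j * ((1 + Rabs a) ^ k * X ^ k) * (exp (- (/ 2 * v)) * exp (- v / 2))) by ring.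
    apply Rmult_le_compat_r; [nra |]. apply Rmult_le_compat_l; auto. }
  rewrite Hid.
  replace ((1 + Rabs a) ^ k * (xi ^ 2 * v ^ j * / X ^ beta) * (exp (- (/ 2 * v)) * exp (- v / 2)))
    with ((1 + Rabs a) ^ k * (v ^ j * exp (- (/ 2 * v))) * / X ^ beta * (xi ^ 2 * exp (- v / 2))) by ring.
  replace ((1 + Rabs a) ^ k * (2 * INR j) ^ j * 2 ^ beta * (xi ^ 2 * exp (- v / 2)) * / japan xi ^ beta)
    with ((1 + Rabs a) ^ k * (2 * INR j) ^ j * (2 ^ beta * / japan xi ^ beta) * (xi ^ 2 * exp (- v / 2))) by ring.
  assert (0 <= (1 + Rabs a) ^ k) by (apply pow_le; lra).
  apply Rmult_le_compat_r; [nra |].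
  apply Rmult_le_compat; [apply Rmult_le_pos; [lra | apply Rmult_le_pos; lra] |
    left; apply Rinv_0_lt_compat; lra | apply Rmult_le_compat_l; auto | exact Hjb].
Qed.

Lemma sym_mon_decay a T beta m : 0 <= T -> sym_balanced beta m -> exists D, 0 < D /\
  forall t xi, 0 <= t <= T -> Cnorm (sym_mon m t (xi, a)) <= D * sym_weight beta t xi.
Proof.
  intros HT Hbal. destruct m as [[c j] k]. simpl in Hbal.
  set (G := Rabs c * exp (T * a ^ 2)).
  set (K := (1 + Rabs a) ^ k * 2 ^ beta * (T ^ j + (2 * INR j) ^ j)).
  assert (HG : 0 <= G) by (unfold G; pose proof (Rabs_pos c); pose proof (exp_pos (T * a ^ 2)); nra).
  assert (HTj : 0 <= T ^ j) by (apply pow_le; lra).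
  assert (H2j : 0 <= (2 * INR j) ^ j) by (apply pow_le; pose proof (pos_INR j); lra).
  assert (HAk : 0 <= (1 + Rabs a) ^ k) by (apply pow_le; pose proof (Rabs_pos a); lra).
  assert (H2b : 0 <= 2 ^ beta) by (apply pow_le; lra).
  assert (HK : 0 <= K) by (unfold K; repeat apply Rmult_le_pos; lra).
  exists (G * K + 1). split; [nra |]. intros t xi Ht.
  eapply Rle_trans; [apply (Cnorm_sym_mon_le c j k T t xi a Ht) |]. fold G.
  set (E := exp (- (t * xi ^ 2) / 2)).
  assert (HJ : 0 < / japan xi ^ beta) by (apply Rinv_0_lt_compat, pow_lt, japan_pos).
  assert (HxE : 0 <= xi ^ 2 * E) by (unfold E; pose proof (exp_pos (- (t * xi ^ 2) / 2)); nra).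
  assert (Hprof : t ^ j * (Rabs xi + Rabs a) ^ k * exp (- (t * xi ^ 2)) <= K * sym_weight beta t xi).
  { unfold sym_weight. fold E. destruct (Rle_lt_dec (Rabs xi) 1) as [Hs|Hl].
    - eapply Rle_trans; [apply (sym_profile_small j k beta T t xi a Ht Hs) |].
      unfold K. apply Rle_trans with ((1 + Rabs a) ^ k * 2 ^ beta * (T ^ j + (2 * INR j) ^ j) * / japan xi ^ beta).
      + replace (T ^ j * (1 + Rabs a) ^ k * 2 ^ beta * / japan xi ^ beta)
          with ((1 + Rabs a) ^ k * 2 ^ beta * T ^ j * / japan xi ^ beta) by ring.
        apply Rmult_le_compat_r; [lra |]. apply Rmult_le_compat_l; [apply Rmult_le_pos; lra | lra].
      + apply Rmult_le_compat_l; [exact HK |].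
        rewrite <- (Rmult_1_r (/ japan xi ^ beta)) at 1. apply Rmult_le_compat_l; lra.
    - eapply Rle_trans; [apply (sym_profile_large j k beta t xi a ltac:(lra) ltac:(lra) Hbal) |]. fold E.
      unfold K. replace ((1 + Rabs a) ^ k * (2 * INR j) ^ j * 2 ^ beta * (xi ^ 2 * E) * / japan xi ^ beta)
        with ((1 + Rabs a) ^ k * 2 ^ beta * (2 * INR j) ^ j * (/ japan xi ^ beta * (xi ^ 2 * E))) by ring.
      apply Rmult_le_compat; [repeat apply Rmult_le_pos; lra | apply Rmult_le_pos; lra | |].
      + apply Rmult_le_compat_l; [apply Rmult_le_pos |]; lra.
      + apply Rmult_le_compat_l; lra. }
  pose proof (sym_weight_pos beta t xi).
  apply Rle_trans with (G * (K * sym_weight beta t xi)); [apply Rmult_le_compat_l; auto |].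
  rewrite <- Rmult_assoc. apply Rmult_le_compat_r; lra.
Qed.

Lemma sym_sum_decay a T beta L : 0 <= T -> (forall m, In m L -> sym_balanced beta m) ->
  exists D, 0 < D /\ forall t xi, 0 <= t <= T -> Cnorm (sym_sum L t (xi, a)) <= D * sym_weight beta t xi.
Proof.
  intros HT HL.
  destruct (sumC_uniform_bound (fun m (p : R * R) => sym_mon m (fst p) (snd p, a))
              (fun p => sym_weight beta (fst p) (snd p)) (fun p => 0 <= fst p <= T) L) as [D [HD P]].
  - intros p _. left; apply sym_weight_pos.
  - intros m Hm. destruct (sym_mon_decay a T beta m HT (HL m Hm)) as [D [HD P]].
    exists D. split; auto.
  - exists D. split; auto. intros t xi Ht. exact (P (t, xi) Ht).
Qed.
(** * Integrals of complex-valued functions *)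

Definition Ccontinuous (f : R -> Cplx) (y : R) : Prop :=
  continuous (fun t => fst (f t)) y /\ continuous (fun t => snd (f t)) y.
Definition Ccontinuous_on (f : R -> Cplx) (a b : R) : Prop := forall y, a <= y <= b -> Ccontinuous f y.

Lemma is_derive_C_Ccontinuous g x L : is_derive_C g x L -> Ccontinuous g x.
Proof.
  rewrite is_derive_C_components. intros [H1 H2].
  split; apply continuity_pt_filterlim, derivable_continuous_pt; eexists; eassumption.
Qed.

Lemma RInt_val_eq f a b : ex_RInt f a b -> RInt_val f a b = RInt f a b.
Proof.
  intro H. unfold RInt_val.
  destruct (epsilon_spec (inhabits 0) (fun v => exists pr : Riemann_integrable f a b, RiemannInt pr = v))
    as [pr Hpr].
  - exists (RInt f a b). exists (ex_RInt_Reals_0 f a b H). symmetry. apply RInt_Reals.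
  - rewrite <- Hpr. symmetry. apply RInt_Reals.
Qed.

Lemma Ccontinuous_on_ex_RInt f a b : a <= b -> Ccontinuous_on f a b ->
  ex_RInt (fun t => fst (f t)) a b /\ ex_RInt (fun t => snd (f t)) a b.
Proof.
  intros Hab H. split; apply (ex_RInt_continuous (V:=R_CompleteNormedModule)); intros y Hy;
  rewrite Rmin_left, Rmax_right in Hy by lra; apply H; lra.
Qed.

Lemma CInt_eq f a b : a <= b -> Ccontinuous_on f a b ->
  CInt f a b = (RInt (fun t => fst (f t)) a b, RInt (fun t => snd (f t)) a b).
Proof.
  intros Hab H. destruct (Ccontinuous_on_ex_RInt f a b Hab H) as [H1 H2]. unfold CInt.
  rewrite !RInt_val_eq; auto.
Qed.

Lemma Ccontinuous_add f g y : Ccontinuous f y -> Ccontinuous g y -> Ccontinuous (fun t => Cadd (f t) (g t)) y.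
Proof.
  intros [F1 F2] [G1 G2]. split.
  - exact (continuous_plus (fun t => fst (f t)) (fun t => fst (g t)) y F1 G1).
  - exact (continuous_plus (fun t => snd (f t)) (fun t => snd (g t)) y F2 G2).
Qed.
Lemma Ccontinuous_opp f y : Ccontinuous f y -> Ccontinuous (fun t => Copp (f t)) y.
Proof.
  intros [F1 F2]. split.
  - exact (continuous_opp (fun t => fst (f t)) y F1).
  - exact (continuous_opp (fun t => snd (f t)) y F2).
Qed.
Lemma Ccontinuous_sub f g y : Ccontinuous f y -> Ccontinuous g y -> Ccontinuous (fun t => Csub (f t) (g t)) y.
Proof. intros. apply Ccontinuous_add; auto. apply Ccontinuous_opp; auto. Qed.
Lemma Ccontinuous_mul f g y : Ccontinuous f y -> Ccontinuous g y -> Ccontinuous (fun t => Cmul (f t) (g t)) y.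
Proof.
  intros [F1 F2] [G1 G2]. split.
  - exact (continuous_minus _ _ y (continuous_mult (fun t => fst (f t)) (fun t => fst (g t)) y F1 G1)
                                  (continuous_mult (fun t => snd (f t)) (fun t => snd (g t)) y F2 G2)).
  - exact (continuous_plus _ _ y (continuous_mult (fun t => fst (f t)) (fun t => snd (g t)) y F1 G2)
                                  (continuous_mult (fun t => snd (f t)) (fun t => fst (g t)) y F2 G1)).
Qed.
Lemma Ccontinuous_const c y : Ccontinuous (fun _ => c) y.
Proof. split; apply continuous_const. Qed.
Lemma Ccontinuous_ext f g y : (forall t, f t = g t) -> Ccontinuous f y -> Ccontinuous g y.
Proof.
  intros E [F1 F2]. split.
  - apply (continuous_ext (fun t => fst (f t))); auto. intro t; rewrite E; auto.
  - apply (continuous_ext (fun t => snd (f t))); auto. intro t; rewrite E; auto.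
Qed.

Lemma CInt_add f g a b : a <= b -> Ccontinuous_on f a b -> Ccontinuous_on g a b ->
  CInt (fun t => Cadd (f t) (g t)) a b = Cadd (CInt f a b) (CInt g a b).
Proof.
  intros Hab Hf Hg.
  assert (Hfg : Ccontinuous_on (fun t => Cadd (f t) (g t)) a b) by (intros y Hy; apply Ccontinuous_add; auto).
  destruct (Ccontinuous_on_ex_RInt f a b Hab Hf) as [F1 F2]. destruct (Ccontinuous_on_ex_RInt g a b Hab Hg) as [G1 G2].
  rewrite !CInt_eq; auto. unfold Cadd. cbn [fst snd]. f_equal.
  - exact (RInt_plus (fun t => fst (f t)) (fun t => fst (g t)) a b F1 G1).
  - exact (RInt_plus (fun t => snd (f t)) (fun t => snd (g t)) a b F2 G2).
Qed.

(* Coquelicot's [RInt_scal], [RInt_plus], [RInt_minus] on [R], with [*], [+], [-] in place of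
   [scal], [plus], [minus] so that they can be used for rewriting. *)
Lemma RInt_scalR g a b k : ex_RInt g a b -> RInt (fun t => k * g t) a b = k * RInt g a b.
Proof. exact (RInt_scal g a b k). Qed.
Lemma ex_RInt_scalR g a b k : ex_RInt g a b -> ex_RInt (fun t => k * g t) a b.
Proof. exact (ex_RInt_scal g a b k). Qed.
Lemma RInt_plusR f g a b : ex_RInt f a b -> ex_RInt g a b ->
  RInt (fun t => f t + g t) a b = RInt f a b + RInt g a b.
Proof. exact (RInt_plus f g a b). Qed.
Lemma RInt_minusR f g a b : ex_RInt f a b -> ex_RInt g a b ->
  RInt (fun t => f t - g t) a b = RInt f a b - RInt g a b.
Proof. exact (RInt_minus f g a b). Qed.

Lemma CInt_cmul c f a b : a <= b -> Ccontinuous_on f a b ->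
  CInt (fun t => Cmul c (f t)) a b = Cmul c (CInt f a b).
Proof.
  intros Hab Hf.
  assert (Hcf : Ccontinuous_on (fun t => Cmul c (f t)) a b)
    by (intros y Hy; apply Ccontinuous_mul; auto; apply Ccontinuous_const).
  destruct (Ccontinuous_on_ex_RInt f a b Hab Hf) as [F1 F2].
  rewrite !CInt_eq; auto. unfold Cmul. cbn [fst snd]. f_equal.
  - rewrite RInt_minusR by (apply ex_RInt_scalR; auto). rewrite !RInt_scalR by auto. reflexivity.
  - rewrite RInt_plusR by (apply ex_RInt_scalR; auto). rewrite !RInt_scalR by auto. reflexivity.
Qed.

Lemma CInt_sub f g a b : a <= b -> Ccontinuous_on f a b -> Ccontinuous_on g a b ->
  CInt (fun t => Csub (f t) (g t)) a b = Csub (CInt f a b) (CInt g a b).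
Proof.
  intros Hab Hf Hg. unfold Csub at 1.
  rewrite CInt_add; auto.
  - replace (fun t => Copp (g t)) with (fun t => Cmul (-1, 0) (g t)) by (apply functional_extensionality; intro; ceq).
    rewrite CInt_cmul; auto. generalize (CInt f a b) (CInt g a b); intros; ceq.
  - intros y Hy. apply Ccontinuous_opp; auto.
Qed.

Lemma CInt_mulc f c a b : a <= b -> Ccontinuous_on f a b ->
  CInt (fun t => Cmul (f t) c) a b = Cmul (CInt f a b) c.
Proof.
  intros. replace (fun t => Cmul (f t) c) with (fun t => Cmul c (f t)) by (apply functional_extensionality; intro; ceq).
  rewrite CInt_cmul; auto. generalize (CInt f a b); intros; ceq.
Qed.

Lemma RInt_abs_le_majorant g B a b : a <= b -> ex_RInt g a b -> ex_RInt B a b ->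
  (forall y, a <= y <= b -> Rabs (g y) <= B y) -> Rabs (RInt g a b) <= RInt B a b.
Proof.
  intros Hab Eg EB Hg. apply Rabs_le. split.
  - assert (E : RInt (fun t => - B t) a b = - RInt B a b)
      by exact (RInt_opp (V := R_CompleteNormedModule) B a b EB).
    rewrite <- E. apply RInt_le; auto; [exact (ex_RInt_opp (V := R_NormedModule) B a b EB) |].
    intros y Hy. specialize (Hg y ltac:(lra)). apply Rabs_le_between in Hg. lra.
  - apply RInt_le; auto. intros y Hy. specialize (Hg y ltac:(lra)). apply Rabs_le_between in Hg. lra.
Qed.

Lemma CInt_bound f B a b : a <= b -> Ccontinuous_on f a b -> (forall y, a <= y <= b -> continuous B y) ->
  (forall y, a <= y <= b -> Cnorm (f y) <= B y) -> Cnorm (CInt f a b) <= 2 * RInt B a b.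
Proof.
  intros Hab Hf HB Hle. destruct (Ccontinuous_on_ex_RInt f a b Hab Hf) as [F1 F2].
  assert (EB : ex_RInt B a b).
  { apply (ex_RInt_continuous (V := R_CompleteNormedModule)). intros y Hy.
    rewrite Rmin_left, Rmax_right in Hy by lra. auto. }
  rewrite CInt_eq; auto. eapply Rle_trans; [apply Cnorm_le_sum |]. cbn [fst snd].
  pose proof (RInt_abs_le_majorant _ B a b Hab F1 EB
                ltac:(intros y Hy; eapply Rle_trans; [apply Cnorm_fst | auto])).
  pose proof (RInt_abs_le_majorant _ B a b Hab F2 EB
                ltac:(intros y Hy; eapply Rle_trans; [apply Cnorm_snd | auto])).
  lra.
Qed.

Lemma CInt_FTC F f a b : a <= b -> (forall y, a <= y <= b -> is_derive_C F y (f y)) ->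
  Ccontinuous_on f a b -> CInt f a b = Csub (F b) (F a).
Proof.
  intros Hab HD Hf. rewrite CInt_eq; auto. unfold Csub, Cadd, Copp. cbn [fst snd]. f_equal.
  - apply is_RInt_unique.
    apply (is_RInt_derive (V := R_CompleteNormedModule) (fun t => fst (F t)) (fun t => fst (f t))).
    + intros y Hy. rewrite Rmin_left, Rmax_right in Hy by lra. apply is_derive_Reals.
      apply is_derive_C_components. auto.
    + intros y Hy. rewrite Rmin_left, Rmax_right in Hy by lra. apply Hf; auto.
  - apply is_RInt_unique.
    apply (is_RInt_derive (V := R_CompleteNormedModule) (fun t => snd (F t)) (fun t => snd (f t))).
    + intros y Hy. rewrite Rmin_left, Rmax_right in Hy by lra. apply is_derive_Reals.
      apply is_derive_C_components. auto.
    + intros y Hy. rewrite Rmin_left, Rmax_right in Hy by lra. apply Hf; auto.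
Qed.

Lemma CInt_chasles f a b c : a <= b <= c -> Ccontinuous_on f a c ->
  CInt f a c = Cadd (CInt f a b) (CInt f b c).
Proof.
  intros H Hf.
  assert (Hab : Ccontinuous_on f a b) by (intros y Hy; apply Hf; lra).
  assert (Hbc : Ccontinuous_on f b c) by (intros y Hy; apply Hf; lra).
  destruct (Ccontinuous_on_ex_RInt f a b ltac:(lra) Hab) as [A1 A2].
  destruct (Ccontinuous_on_ex_RInt f b c ltac:(lra) Hbc) as [B1 B2].
  rewrite !CInt_eq; auto; try lra. unfold Cadd. cbn [fst snd]. f_equal; symmetry.
  - exact (RInt_Chasles (V:=R_CompleteNormedModule) (fun t => fst (f t)) a b c A1 B1).
  - exact (RInt_Chasles (V:=R_CompleteNormedModule) (fun t => snd (f t)) a b c A2 B2).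
Qed.

(** * Improper integrals on [[0, oo)] with [1 / (1 + (y - x)^2)] majorants *)

Lemma continuous_lorentz x y : continuous (fun y => / (1 + (y - x) ^ 2)) y.
Proof.
  apply (continuous_Rinv_comp (fun y => 1 + (y - x) ^ 2)).
  - apply (ex_derive_continuous (K := R_AbsRing) (V := R_NormedModule)). auto_derive; auto.
  - apply Rgt_not_eq. pose proof (pow2_ge_0 (y - x)). lra.
Qed.

Lemma ex_RInt_lorentz x T1 T2 : ex_RInt (fun y => / (1 + (y - x) ^ 2)) T1 T2.
Proof. apply (ex_RInt_continuous (V := R_CompleteNormedModule)). intros y _. apply continuous_lorentz. Qed.

Lemma RInt_lorentz x T1 T2 : RInt (fun y => / (1 + (y - x) ^ 2)) T1 T2 = atan (T2 - x) - atan (T1 - x).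
Proof.
  apply is_RInt_unique.
  apply (is_RInt_derive (V := R_CompleteNormedModule) (fun y => atan (y - x))).
  - intros y _. apply is_derive_Reals.
    pose proof (derivable_pt_lim_comp (fun y => y - x) atan y 1 _
      ltac:(apply is_derive_Reals; auto_derive; auto; ring) (derivable_pt_lim_atan (y - x))) as H.
    unfold comp in H. eapply derivable_pt_lim_val; [exact H | ring].
  - intros y _. apply continuous_lorentz.
Qed.

Lemma atan_le x y : x <= y -> atan x <= atan y.
Proof. intro H. destruct (Req_dec x y) as [->|]; [lra |]. left; apply atan_increasing; lra. Qed.

Lemma atan_increment_small x C eps : 0 <= C -> 0 < eps ->
  exists M, forall T T', M <= T <= T' -> C * (atan (T' - x) - atan (T - x)) < eps.
Proof.
  intros HC He. pose proof PI2_1.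
  set (e := eps / (C + 1)). assert (Hee : 0 < e) by (apply Rdiv_lt_0_compat; lra).
  set (d := Rmin e (PI / 2) / 2).
  assert (Hd : 0 < d) by (unfold d; apply Rmin_case; lra).
  assert (Hd2 : d < PI / 2) by (unfold d; pose proof (Rmin_r e (PI / 2)); lra).
  assert (Hde : d < e) by (unfold d; pose proof (Rmin_l e (PI / 2)); lra).
  assert (Hce : C * e < eps).
  { unfold e. replace (C * (eps / (C + 1))) with (eps - eps / (C + 1)) by (field; lra).
    pose proof (Rdiv_lt_0_compat eps (C + 1) He ltac:(lra)). lra. }
  exists (x + tan (PI / 2 - d)). intros T T' HT.
  assert (atan (tan (PI / 2 - d)) = PI / 2 - d) by (apply atan_tan; lra).
  assert (atan (tan (PI / 2 - d)) <= atan (T - x)) by (apply atan_le; lra).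
  pose proof (atan_bound (T' - x)).
  assert (C * (atan (T' - x) - atan (T - x)) <= C * e) by (apply Rmult_le_compat_l; lra).
  lra.
Qed.

Lemma nat_above r : exists n : nat, r < INR n.
Proof. destruct (INR_archimed 1 r ltac:(lra)) as [n Hn]. exists n. lra. Qed.

Lemma Cauchy_pinfty_lim (F : R -> R) :
  (forall eps, 0 < eps -> exists M, forall T T', M <= T <= T' -> Rabs (F T' - F T) < eps) ->
  exists l, forall eps, 0 < eps -> exists M, forall T, M <= T -> Rabs (F T - l) < eps.
Proof.
  intro Tail. set (u := fun n : nat => F (INR n)).
  assert (Cu : Cauchy_crit u).
  { intros eps He. destruct (Tail eps He) as [M HM]. destruct (nat_above M) as [N HN].
    exists N. intros n m Hn Hm. unfold Rdist, u.
    apply le_INR in Hn. apply le_INR in Hm.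
    destruct (Rle_dec (INR n) (INR m)); [rewrite Rabs_minus_sym |]; apply HM; lra. }
  destruct (Rcomplete.R_complete u Cu) as [l Hl].
  exists l. intros eps He.
  destruct (Tail (eps / 2) ltac:(lra)) as [M HM]. exists M. intros T HT.
  destruct (Hl (eps / 2) ltac:(lra)) as [N HN].
  destruct (nat_above (Rmax T (INR N))) as [n Hn].
  assert (Hn1 : (n >= N)%nat) by (apply INR_le; pose proof (Rmax_r T (INR N)); lra).
  specialize (HN n Hn1). unfold Rdist, u in HN.
  assert (Rabs (F (INR n) - F T) < eps / 2) by (apply HM; pose proof (Rmax_l T (INR N)); lra).
  replace (F T - l) with ((F (INR n) - l) - (F (INR n) - F T)) by ring.
  eapply Rle_lt_trans; [apply Rabs_triang |]. rewrite Rabs_Ropp. lra.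
Qed.

Definition Clim_pinfty (F : R -> Cplx) (v : Cplx) : Prop :=
  forall eps, 0 < eps -> exists M, forall T, M <= T -> Cnorm (Csub (F T) v) < eps.

Lemma Cauchy_pinfty_Clim (F : R -> Cplx) :
  (forall eps, 0 < eps -> exists M, forall T T', M <= T <= T' -> Cnorm (Csub (F T') (F T)) < eps) ->
  exists v, Clim_pinfty F v.
Proof.
  intro Tail.
  destruct (Cauchy_pinfty_lim (fun T => fst (F T))) as [l1 H1].
  { intros eps He. destruct (Tail eps He) as [M HM]. exists M. intros T T' HT.
    eapply Rle_lt_trans; [| apply (HM T T' HT)]. eapply Rle_trans; [| apply Cnorm_fst]. right. reflexivity. }
  destruct (Cauchy_pinfty_lim (fun T => snd (F T))) as [l2 H2].
  { intros eps He. destruct (Tail eps He) as [M HM]. exists M. intros T T' HT.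
    eapply Rle_lt_trans; [| apply (HM T T' HT)]. eapply Rle_trans; [| apply Cnorm_snd]. right. reflexivity. }
  exists (l1, l2). intros eps He.
  destruct (H1 (eps / 2) ltac:(lra)) as [M1 HM1]. destruct (H2 (eps / 2) ltac:(lra)) as [M2 HM2].
  exists (Rmax M1 M2). intros T HT.
  specialize (HM1 T ltac:(pose proof (Rmax_l M1 M2); lra)). specialize (HM2 T ltac:(pose proof (Rmax_r M1 M2); lra)).
  eapply Rle_lt_trans; [apply Cnorm_le_sum |]. csimpl. unfold Rminus in *. lra.
Qed.

Lemma Clim_pinfty_sub F G u v : Clim_pinfty F u -> Clim_pinfty G v ->
  Clim_pinfty (fun T => Csub (F T) (G T)) (Csub u v).
Proof.
  intros HF HG eps He. destruct (HF (eps / 2) ltac:(lra)) as [M1 P1]. destruct (HG (eps / 2) ltac:(lra)) as [M2 P2].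
  exists (Rmax M1 M2). intros T HT.
  specialize (P1 T ltac:(pose proof (Rmax_l M1 M2); lra)). specialize (P2 T ltac:(pose proof (Rmax_r M1 M2); lra)).
  replace (Csub (Csub (F T) (G T)) (Csub u v)) with (Csub (Csub (F T) u) (Csub (G T) v))
    by (generalize (F T) (G T); intros; ceq).
  eapply Rle_lt_trans; [apply Cnorm_sub_tri | lra].
Qed.

Lemma Clim_pinfty_const c : Clim_pinfty (fun _ => c) c.
Proof. intros eps He. exists 0. intros. replace (Csub c c) with C0 by ceq. rewrite Cnorm_C0. lra. Qed.

Lemma Clim_pinfty_bound F v B (e : R -> R) : Clim_pinfty F v ->
  (forall eps, 0 < eps -> exists M, forall T, M <= T -> e T < eps) ->
  (exists M0, forall T, M0 <= T -> Cnorm (F T) <= B + e T) -> Cnorm v <= B.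
Proof.
  intros HF He [M0 HM0]. apply Rnot_lt_le. intro Hlt.
  set (d := (Cnorm v - B) / 3). assert (Hd : 0 < d) by (unfold d; lra).
  destruct (HF d Hd) as [M1 P1]. destruct (He d Hd) as [M2 P2].
  set (T := Rmax M0 (Rmax M1 M2)).
  pose proof (Rmax_l M0 (Rmax M1 M2)). pose proof (Rmax_r M0 (Rmax M1 M2)).
  pose proof (Rmax_l M1 M2). pose proof (Rmax_r M1 M2).
  specialize (HM0 T ltac:(unfold T; lra)). specialize (P1 T ltac:(unfold T; lra)).
  specialize (P2 T ltac:(unfold T; lra)).
  assert (Cnorm v <= Cnorm (F T) + Cnorm (Csub (F T) v)).
  { replace v with (Csub (F T) (Csub (F T) v)) at 1 by (generalize (F T); intros; ceq).
    apply Cnorm_sub_tri. }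
  unfold d in *. lra.
Qed.

Lemma Clim_pinfty_const_bound F v B : Clim_pinfty F v ->
  (forall T, 0 <= T -> Cnorm (F T) <= B) -> Cnorm v <= B.
Proof.
  intros HF HB. apply (Clim_pinfty_bound F v B (fun _ => 0) HF).
  - intros eps He. exists 0. intros; lra.
  - exists 0. intros T HT. rewrite Rplus_0_r. apply HB; lra.
Qed.

Section Lorentz_majorant.

Variables (f : R -> Cplx) (x C : R).
Hypotheses (HC : 0 <= C) (Hf : forall y, 0 <= y -> Ccontinuous f y)
  (Hb : forall y, 0 <= y -> Cnorm (f y) <= C * / (1 + (y - x) ^ 2)).

Lemma CInt_lorentz_bound T T' : 0 <= T <= T' -> Cnorm (CInt f T T') <= 2 * C * (atan (T' - x) - atan (T - x)).
Proof.
  intro HT. eapply Rle_trans.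
  - apply (CInt_bound f (fun y => C * / (1 + (y - x) ^ 2))); [lra | intros y Hy; apply Hf; lra | |].
    + intros y _. apply (continuous_mult (fun _ => C)); [apply continuous_const | apply continuous_lorentz].
    + intros y Hy. apply Hb. lra.
  - rewrite RInt_scalR by apply ex_RInt_lorentz. rewrite RInt_lorentz. lra.
Qed.

Lemma CInt_improper_bound T : 0 <= T -> Cnorm (CInt f 0 T) <= 2 * C * PI.
Proof.
  intro HT. eapply Rle_trans; [apply CInt_lorentz_bound; lra |].
  pose proof (atan_bound (T - x)). pose proof (atan_bound (0 - x)).
  apply Rmult_le_compat_l; lra.
Qed.

Lemma CInt_improper_lim : exists v, Clim_pinfty (fun T => CInt f 0 T) v.
Proof.
  apply Cauchy_pinfty_Clim. intros eps He.
  destruct (atan_increment_small x (2 * C) eps ltac:(lra) He) as [M HM].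
  exists (Rmax M 0). intros T T' HT.
  pose proof (Rmax_l M 0). pose proof (Rmax_r M 0).
  rewrite (CInt_chasles f 0 T T') by (first [lra | intros y Hy; apply Hf; lra]).
  replace (Csub (Cadd (CInt f 0 T) (CInt f T T')) (CInt f 0 T)) with (CInt f T T')
    by (generalize (CInt f 0 T) (CInt f T T'); intros; ceq).
  eapply Rle_lt_trans; [apply CInt_lorentz_bound | apply HM]; lra.
Qed.

End Lorentz_majorant.

(** * The function [w] *)

Lemma K_a_heat_sum a s u : K_a a s u = heat_sum a (heat_derivs a 0) s u.
Proof.
  unfold K_a, heat_sum, heat_derivs. simpl Nat.iter. cbn [sumC].
  unfold heat_mon, gauss_mon, heat_const. simpl Cpow.
  generalize (Cexp (Cadd (Cscal (- / (4 * s)) (Cmul u u)) (Cscal a u))). intro E.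
  destruct E. csimpl. simpl pow. rewrite Rinv_1. f_equal; ring.
Qed.

Lemma holo_deriv_K_a a s : s <> 0 -> holo_deriv (K_a a s) (heat_sum a (heat_derivs a 1) s).
Proof.
  intro Hs. eapply holo_deriv_ext; [intro; symmetry; apply K_a_heat_sum| intro; reflexivity|].
  apply holo_deriv_heat_derivs; auto.
Qed.

Lemma Csub_RtoC_line z y : Csub z (RtoC y) = line z (-1, 0) y.
Proof. unfold line. ceq. Qed.

Lemma holo_Ccontinuous_shift F F1 z y : holo_deriv F F1 -> Ccontinuous (fun t => F (Csub z (RtoC t))) y.
Proof.
  intro H. apply (Ccontinuous_ext (fun t => F (line z (-1, 0) t))); [intro t; rewrite Csub_RtoC_line; auto |].
  eapply is_derive_C_Ccontinuous. apply H.
Qed.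

Lemma is_derive_C_shift F F1 z y : holo_deriv F F1 ->
  is_derive_C (fun t => F (Csub z (RtoC t))) y (Copp (F1 (Csub z (RtoC y)))).
Proof.
  intro H. apply (is_derive_C_ext (fun t => F (line z (-1,0) t))). intro t; rewrite Csub_RtoC_line; auto.
  eapply is_derive_C_val. apply H. rewrite Csub_RtoC_line. generalize (F1 (line z (-1, 0) y)). intro; ceq.
Qed.

Lemma snd_Csub_RtoC z y : snd (Csub z (RtoC y)) = snd z.
Proof. csimpl. ring. Qed.
Lemma fst_Csub_RtoC_sqr z y : fst (Csub z (RtoC y)) ^ 2 = (y - fst z) ^ 2.
Proof. csimpl. ring. Qed.

Lemma heat_sum_shift_bound a t0 t1 b L : 0 < t0 -> t0 <= t1 -> 0 <= b ->
  exists C, 0 < C /\ forall s z y, t0 <= s <= t1 -> Rabs (snd z) <= b ->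
    Cnorm (heat_sum a L s (Csub z (RtoC y))) <= C * / (1 + (y - fst z) ^ 2).
Proof.
  intros H0 H1 Hb. destruct (heat_sum_bound a t0 t1 b L H0 H1 Hb) as [C [HC P]].
  exists C. split; auto. intros s z y Hs Hz. specialize (P s (Csub z (RtoC y)) Hs).
  rewrite snd_Csub_RtoC, fst_Csub_RtoC_sqr in P. apply P; auto.
Qed.

Definition w_integrand a s z (y : R) : Cplx := K_a a s (Csub z (RtoC y)).

Lemma w_integrand_Ccontinuous a s z y : 0 < s -> Ccontinuous (w_integrand a s z) y.
Proof. intro Hs. unfold w_integrand. eapply holo_Ccontinuous_shift. apply holo_deriv_K_a. lra. Qed.

Lemma w_integrand_bound a t0 t1 b : 0 < t0 -> t0 <= t1 -> 0 <= b ->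
  exists C, 0 < C /\ forall s z y, t0 <= s <= t1 -> Rabs (snd z) <= b ->
    Cnorm (w_integrand a s z y) <= C * / (1 + (y - fst z) ^ 2).
Proof.
  intros H0 H1 Hb. destruct (heat_sum_shift_bound a t0 t1 b (heat_derivs a 0) H0 H1 Hb) as [C [HC P]].
  exists C. split; auto. intros s z y Hs Hz. unfold w_integrand. rewrite K_a_heat_sum. auto.
Qed.

Lemma w_fun_lim a s z : 0 < s -> Clim_pinfty (fun T => CInt (w_integrand a s z) 0 T) (w_fun a s z).
Proof.
  intro Hs.
  destruct (w_integrand_bound a s s (Rabs (snd z)) Hs (Rle_refl s) (Rabs_pos _)) as [C [HC P]].
  destruct (CInt_improper_lim (w_integrand a s z) (fst z) C ltac:(lra)) as [v Hv];
    [intros; apply w_integrand_Ccontinuous; auto | intros y _; apply P; lra |].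
  apply (epsilon_spec (inhabits (0, 0)) (Clim_pinfty (fun T => CInt (w_integrand a s z) 0 T))).
  exists v. exact Hv.
Qed.

Lemma w_fun_bound a t0 t1 b : 0 < t0 -> t0 <= t1 -> 0 <= b ->
  exists W, 0 < W /\ forall s z, t0 <= s <= t1 -> Rabs (snd z) <= b -> Cnorm (w_fun a s z) <= W.
Proof.
  intros H0 H1 Hb. destruct (w_integrand_bound a t0 t1 b H0 H1 Hb) as [C [HC P]].
  exists (2 * C * PI). split; [pose proof PI_RGT_0; nra |]. intros s z Hs Hz.
  apply (Clim_pinfty_const_bound _ _ _ (w_fun_lim a s z ltac:(lra))).
  apply (CInt_improper_bound _ (fst z) C); [lra | intros; apply w_integrand_Ccontinuous; lra | intros y _; apply P; lra].
Qed.

Lemma lorentz_shift_le X th : Rabs th <= 1 -> 1 + X ^ 2 <= 3 * (1 + (X + th) ^ 2).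
Proof.
  intro H. assert (th ^ 2 <= 1) by (rewrite <- pow2_abs; pose proof (Rabs_pos th); nra).
  pose proof (pow2_ge_0 (X + 2 * th)). nra.
Qed.

Lemma lorentz_tends_0 C x : 0 <= C -> forall eps, 0 < eps ->
  exists M, forall T, M <= T -> C * / (1 + (T - x) ^ 2) < eps.
Proof.
  intros HC eps He. exists (x + C / eps + 1). intros T HT.
  assert (Hq : C / eps <= T - x - 1) by lra.
  assert (HT1 : 1 <= T - x) by (assert (0 <= C / eps) by (apply Rdiv_le_0_compat; lra); lra).
  apply (Rmult_lt_reg_r (1 + (T - x) ^ 2)); [nra |].
  rewrite Rmult_assoc, Rinv_l, Rmult_1_r by nra.
  assert (C <= eps * (T - x - 1)).
  { apply (Rmult_le_compat_l eps) in Hq; [| lra]. replace (eps * (C / eps)) with C in Hq by (field; lra). lra. }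
  nra.
Qed.

Lemma K_a_taylor_shift a t0 t1 b : 0 < t0 -> t0 <= t1 -> 0 <= b ->
  exists C, 0 < C /\ forall s z h y, t0 <= s <= t1 -> Rabs (snd z) <= b -> Cnorm h <= 1 ->
    Cnorm (Csub (Csub (K_a a s (Csub (Cadd z h) (RtoC y))) (K_a a s (Csub z (RtoC y))))
                (Cmul (heat_sum a (heat_derivs a 1) s (Csub z (RtoC y))) h))
      <= C * Cnorm h ^ 2 * / (1 + (y - fst z) ^ 2).
Proof.
  intros H0 H1 Hb.
  destruct (heat_sum_bound a t0 t1 (b + 1) (heat_derivs a 2) H0 H1 ltac:(lra)) as [C2 [HC2 P2]].
  exists (6 * C2). split; [lra |]. intros s z h y Hs Hz Hh.
  replace (Csub (Cadd z h) (RtoC y)) with (Cadd (Csub z (RtoC y)) h) by ceq.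
  set (x := fst z). assert (Hx2 : 0 < 1 + (y - x) ^ 2) by (pose proof (pow2_ge_0 (y - x)); lra).
  eapply Rle_trans.
  - apply (holo_taylor _ _ (heat_sum a (heat_derivs a 2) s) _ h (3 * C2 * / (1 + (y - x) ^ 2)));
      [| apply holo_deriv_heat_derivs; lra |].
    + eapply holo_deriv_ext; [intro; symmetry; apply K_a_heat_sum | intro; reflexivity |].
      apply holo_deriv_heat_derivs; lra.
    + intros t Ht. pose proof (Cnorm_snd h). pose proof (Cnorm_fst h).
      eapply Rle_trans; [apply P2; [lra |] |].
      * unfold line. csimpl. replace (snd z + - 0 + t * snd h) with (snd z + t * snd h) by ring.
        pose proof (Rabs_pos (snd h)).
        eapply Rle_trans; [apply Rabs_triang |]. rewrite Rabs_mult, (Rabs_right t) by lra.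
        assert (t * Rabs (snd h) <= 1 * 1) by (apply Rmult_le_compat; lra). lra.
      * unfold line. csimpl. pose proof (Rabs_pos (fst h)).
        assert (Hth : Rabs (- (t * fst h)) <= 1).
        { rewrite Rabs_Ropp, Rabs_mult, (Rabs_right t) by lra.
          apply Rle_trans with (1 * 1); [apply Rmult_le_compat; lra | lra]. }
        pose proof (lorentz_shift_le (y - x) (- (t * fst h)) Hth) as SI.
        replace ((fst z + - y + t * fst h) ^ 2) with ((y - x + - (t * fst h)) ^ 2) by (unfold x; ring).
        set (W := y - x + - (t * fst h)) in *. pose proof (pow2_ge_0 W).
        unfold Rdiv. apply (Rmult_le_reg_r ((1 + W ^ 2) * (1 + (y - x) ^ 2))); [apply Rmult_lt_0_compat; lra |].
        replace (C2 * / (1 + W ^ 2) * ((1 + W ^ 2) * (1 + (y - x) ^ 2))) with (C2 * (1 + (y - x) ^ 2)) by (field; lra).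
        replace (3 * C2 * / (1 + (y - x) ^ 2) * ((1 + W ^ 2) * (1 + (y - x) ^ 2))) with (C2 * (3 * (1 + W ^ 2)))
          by (field; lra).
        apply Rmult_le_compat_l; lra.
  - right. field. lra.
Qed.

Lemma CInt_heat_deriv_shift a s z T : 0 < s -> 0 <= T ->
  CInt (fun y => heat_sum a (heat_derivs a 1) s (Csub z (RtoC y))) 0 T =
  Csub (K_a a s z) (K_a a s (Csub z (RtoC T))).
Proof.
  intros Hs HT. pose proof (holo_deriv_K_a a s ltac:(lra)) as LK.
  assert (FT : CInt (fun y => Copp (heat_sum a (heat_derivs a 1) s (Csub z (RtoC y)))) 0 T =
               Csub (K_a a s (Csub z (RtoC T))) (K_a a s (Csub z (RtoC 0)))).
  { apply (CInt_FTC (fun y => K_a a s (Csub z (RtoC y)))); [lra | intros y _; apply (is_derive_C_shift _ _ z y LK) |].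
    intros y _. apply Ccontinuous_opp. eapply holo_Ccontinuous_shift. apply holo_deriv_heat_derivs. lra. }
  replace (Csub z (RtoC 0)) with z in FT by ceq.
  replace (fun y => Copp (heat_sum a (heat_derivs a 1) s (Csub z (RtoC y))))
    with (fun y => Cmul (-1, 0) (heat_sum a (heat_derivs a 1) s (Csub z (RtoC y)))) in FT
    by (apply functional_extensionality; intro; ceq).
  rewrite CInt_cmul in FT; [| lra | intros y _; eapply holo_Ccontinuous_shift; apply holo_deriv_heat_derivs; lra].
  revert FT. generalize (CInt (fun y => heat_sum a (heat_derivs a 1) s (Csub z (RtoC y))) 0 T)
    (K_a a s (Csub z (RtoC T))) (K_a a s z).
  intros [i1 i2] [k1 k2] [k3 k4] FT. csimpl. inversion FT. f_equal; lra.
Qed.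

Lemma w_fun_taylor a t0 t1 b : 0 < t0 -> t0 <= t1 -> 0 <= b ->
  exists M, 0 < M /\ forall s z h, t0 <= s <= t1 -> Rabs (snd z) <= b -> Cnorm h <= 1 ->
    Cnorm (Csub (Csub (w_fun a s (Cadd z h)) (w_fun a s z)) (Cmul (K_a a s z) h)) <= M * Cnorm h ^ 2.
Proof.
  intros H0 H1 Hb.
  destruct (w_integrand_bound a t0 t1 b H0 H1 Hb) as [C0 [HC0 P0]].
  destruct (K_a_taylor_shift a t0 t1 b H0 H1 Hb) as [C [HC P]].
  exists (2 * C * PI). split; [pose proof PI_RGT_0; nra |]. intros s z h Hs Hz Hh.
  set (K1 := heat_sum a (heat_derivs a 1) s).
  set (Rem := fun y => Csub (Csub (w_integrand a s (Cadd z h) y) (w_integrand a s z y))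
                            (Cmul (K1 (Csub z (RtoC y))) h)).
  assert (CK1 : forall y, Ccontinuous (fun y => K1 (Csub z (RtoC y))) y)
    by (intro; eapply holo_Ccontinuous_shift; apply holo_deriv_heat_derivs; lra).
  assert (CRem : forall y, Ccontinuous Rem y).
  { intro y. unfold Rem. apply Ccontinuous_sub; [apply Ccontinuous_sub; apply w_integrand_Ccontinuous; lra |].
    apply Ccontinuous_mul; [apply CK1 | apply Ccontinuous_const]. }
  assert (Hc : 0 <= C * Cnorm h ^ 2) by (pose proof (pow2_ge_0 (Cnorm h)); nra).
  (* [w(z + h) - w(z) - K(z) h] is the limit of [int_0^T Rem - K(z - T) h] *)
  assert (Id : forall T, 0 <= T ->
    Csub (Csub (CInt (w_integrand a s (Cadd z h)) 0 T) (CInt (w_integrand a s z) 0 T)) (Cmul (K_a a s z) h)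
    = Csub (CInt Rem 0 T) (Cmul (w_integrand a s z T) h)).
  { intros T HT.
    assert (E : CInt Rem 0 T = Csub (Csub (CInt (w_integrand a s (Cadd z h)) 0 T) (CInt (w_integrand a s z) 0 T))
                                    (Cmul (CInt (fun y => K1 (Csub z (RtoC y))) 0 T) h)).
    { unfold Rem. rewrite CInt_sub; [| lra | | intros y _; apply Ccontinuous_mul; [apply CK1 | apply Ccontinuous_const]].
      - rewrite CInt_sub, CInt_mulc; auto; try lra; intros y _; auto; apply w_integrand_Ccontinuous; lra.
      - intros y _. apply Ccontinuous_sub; apply w_integrand_Ccontinuous; lra. }
    rewrite E. unfold K1. rewrite CInt_heat_deriv_shift by lra.
    change (w_integrand a s z T) with (K_a a s (Csub z (RtoC T))).
    generalize (CInt (w_integrand a s (Cadd z h)) 0 T) (CInt (w_integrand a s z) 0 T)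
      (K_a a s z) (K_a a s (Csub z (RtoC T))) h.
    clear. intros. ceq. }
  apply (Clim_pinfty_bound _ _ _ (fun T => C0 * / (1 + (T - fst z) ^ 2))
    (Clim_pinfty_sub _ _ _ _ (Clim_pinfty_sub _ _ _ _ (w_fun_lim a s (Cadd z h) ltac:(lra))
      (w_fun_lim a s z ltac:(lra))) (Clim_pinfty_const (Cmul (K_a a s z) h)))).
  - apply lorentz_tends_0. lra.
  - exists 0. intros T HT. rewrite Id by auto.
    eapply Rle_trans; [apply Cnorm_sub_tri | apply Rplus_le_compat].
    + replace (2 * C * PI * Cnorm h ^ 2) with (2 * (C * Cnorm h ^ 2) * PI) by ring.
      apply (CInt_improper_bound Rem (fst z)); auto. intros y _. unfold Rem, w_integrand, K1.
      apply P; auto.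
    + rewrite Cnorm_mul. pose proof (P0 s z T Hs Hz). pose proof (Cnorm_ge0 (w_integrand a s z T)).
      pose proof (Cnorm_ge0 h). apply Rle_trans with (C0 * / (1 + (T - fst z) ^ 2) * 1); [| lra].
      apply Rmult_le_compat; lra.
Qed.
(** * Regularity of [w] in time *)

(* [d_s K_a = (- 1 / (2 s) + u^2 / (4 s^2)) K_a]. *)
Definition heat_dtime : list (R * nat * nat) := (-1/2, 1%nat, 0%nat) :: (1/4, 2%nat, 2%nat) :: nil.

Lemma is_derive_C_K_a_time a u sg : 0 < sg ->
  is_derive_C (fun s => K_a a s u) sg (heat_sum a heat_dtime sg u).
Proof.
  intro Hs. unfold K_a.
  assert (Dc : derivable_pt_lim (fun s => / sqrt (4 * PI * s)) sg (- / (2 * sg) * / sqrt (4 * PI * sg))).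
  { apply is_derive_Reals. pose proof PI_RGT_0. auto_derive.
    - repeat split; try nra. apply Rgt_not_eq, sqrt_lt_R0; nra.
    - rewrite sqrt_sqrt by nra. field. split. apply Rgt_not_eq, sqrt_lt_R0; nra. split; lra. }
  assert (DA : derivable_pt_lim (fun s => - / (4 * s)) sg (/ (4 * sg ^ 2))).
  { apply is_derive_Reals. auto_derive. lra. field. lra. }
  eapply is_derive_C_val.
  - eapply (is_derive_C_scal (fun s => / sqrt (4 * PI * s))
              (fun s => Cexp (Cadd (Cscal (- / (4 * s)) (Cmul u u)) (Cscal a u))) sg _ _ Dc).
    apply is_derive_C_exp, is_derive_C_plus; [| apply is_derive_C_const].
    eapply (is_derive_C_scal (fun s => - / (4 * s)) (fun _ => Cmul u u) sg _ _ DA), is_derive_C_const.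
  - unfold heat_sum, heat_dtime. cbn [sumC]. unfold heat_mon, gauss_mon, heat_const. simpl Cpow.
    generalize (Cexp (Cadd (Cscal (- / (4 * sg)) (Cmul u u)) (Cscal a u))). intro E.
    assert (0 < sqrt (4 * PI * sg)) by (apply sqrt_lt_R0; pose proof PI_RGT_0; nra).
    destruct E, u. csimpl. simpl pow. f_equal; field; split; lra.
Qed.

Lemma K_a_lipschitz_time a t0 t1 b : 0 < t0 -> t0 <= t1 -> 0 <= b ->
  exists C, 0 < C /\ forall s s' u, t0 <= s <= t1 -> t0 <= s' <= t1 -> Rabs (snd u) <= b ->
    Cnorm (Csub (K_a a s u) (K_a a s' u)) <= C * Rabs (s - s') * / (1 + fst u ^ 2).
Proof.
  intros H0 H1 Hb. destruct (heat_sum_bound a t0 t1 b heat_dtime H0 H1 Hb) as [C [HC P]].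
  exists (2 * C). split; [lra |]. intros s s' u Hs Hs' Hu.
  assert (G : forall p q, t0 <= p <= q -> q <= t1 ->
    Cnorm (Csub (K_a a q u) (K_a a p u)) <= 2 * C * (q - p) * / (1 + fst u ^ 2)).
  { intros p q Hp Hq. eapply Rle_trans.
    - apply (is_derive_C_lipschitz (fun s => K_a a s u) (fun s => heat_sum a heat_dtime s u) p q
               (C / (1 + fst u ^ 2)));
        [lra | intros t Ht; apply is_derive_C_K_a_time; lra | intros t Ht; apply P; auto; lra].
    - right. unfold Rdiv. ring. }
  destruct (Rle_dec s' s).
  - rewrite Rabs_right by lra. apply G; lra.
  - rewrite Rabs_left by lra.
    replace (Csub (K_a a s u) (K_a a s' u)) with (Copp (Csub (K_a a s' u) (K_a a s u))) by
      (generalize (K_a a s u) (K_a a s' u); intros; ceq).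
    rewrite Cnorm_opp. replace (- (s - s')) with (s' - s) by ring. apply G; lra.
Qed.

Lemma w_fun_lipschitz_time a t0 t1 b : 0 < t0 -> t0 <= t1 -> 0 <= b ->
  exists L, 0 < L /\ forall s s' z, t0 <= s <= t1 -> t0 <= s' <= t1 -> Rabs (snd z) <= b ->
    Cnorm (Csub (w_fun a s z) (w_fun a s' z)) <= L * Rabs (s - s').
Proof.
  intros H0 H1 Hb. destruct (K_a_lipschitz_time a t0 t1 b H0 H1 Hb) as [C [HC P]].
  exists (2 * C * PI). split; [pose proof PI_RGT_0; nra |]. intros s s' z Hs Hs' Hz.
  set (f := fun y => Csub (w_integrand a s z y) (w_integrand a s' z y)).
  assert (HC' : 0 <= C * Rabs (s - s')) by (pose proof (Rabs_pos (s - s')); nra).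
  apply (Clim_pinfty_const_bound _ _ _
           (Clim_pinfty_sub _ _ _ _ (w_fun_lim a s z ltac:(lra)) (w_fun_lim a s' z ltac:(lra)))).
  intros T HT. rewrite <- CInt_sub by (first [lra | intros y _; apply w_integrand_Ccontinuous; lra]).
  replace (2 * C * PI * Rabs (s - s')) with (2 * (C * Rabs (s - s')) * PI) by ring.
  apply (CInt_improper_bound f (fst z)); auto.
  - intros y _. unfold f. apply Ccontinuous_sub; apply w_integrand_Ccontinuous; lra.
  - intros y _. unfold f, w_integrand. rewrite <- fst_Csub_RtoC_sqr. apply P; auto. rewrite snd_Csub_RtoC; auto.
Qed.

Lemma continuous_of_lipschitz (g : R -> R) s0 d L : 0 < d -> 0 <= L ->
  (forall s, Rabs (s - s0) <= d -> Rabs (g s - g s0) <= L * Rabs (s - s0)) -> continuous g s0.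
Proof.
  intros Hd HL H. apply continuity_pt_filterlim. unfold continuity_pt, continue_in, limit1_in, limit_in.
  intros eps He. exists (Rmin d (eps / (L + 1))). split; [apply Rmin_case; [lra | apply Rdiv_lt_0_compat; lra] |].
  intros x [_ Hx]. simpl in *. unfold R_dist in *.
  pose proof (Rmin_l d (eps / (L + 1))). pose proof (Rmin_r d (eps / (L + 1))).
  eapply Rle_lt_trans; [apply H; lra |].
  apply Rle_lt_trans with ((L + 1) * Rabs (x - s0)); [pose proof (Rabs_pos (x - s0)); nra |].
  assert (Hx2 : Rabs (x - s0) < eps / (L + 1)) by lra.
  apply (Rmult_lt_compat_l (L + 1)) in Hx2; [| lra].
  replace ((L + 1) * (eps / (L + 1))) with eps in Hx2 by (field; lra). lra.
Qed.

Lemma Ccontinuous_of_lipschitz (g : R -> Cplx) s0 d L : 0 < d -> 0 <= L ->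
  (forall s, Rabs (s - s0) <= d -> Cnorm (Csub (g s) (g s0)) <= L * Rabs (s - s0)) -> Ccontinuous g s0.
Proof.
  intros Hd HL H. split; apply (continuous_of_lipschitz _ s0 d L Hd HL); intros s Hs;
    eapply Rle_trans; try apply (H s Hs).
  - pose proof (Cnorm_fst (Csub (g s) (g s0))). csimpl. unfold Rminus. lra.
  - pose proof (Cnorm_snd (Csub (g s) (g s0))). csimpl. unfold Rminus. lra.
Qed.

Lemma w_fun_Ccontinuous_time a z s0 : 0 < s0 -> Ccontinuous (fun s => w_fun a s z) s0.
Proof.
  intro Hs0.
  destruct (w_fun_lipschitz_time a (s0 / 2) (2 * s0) (Rabs (snd z)) ltac:(lra) ltac:(lra) (Rabs_pos _))
    as [L [HL P]].
  apply (Ccontinuous_of_lipschitz _ s0 (s0 / 2) L); [lra | lra |].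
  intros s Hs. apply Rabs_le_between in Hs. apply P; [split; lra | split; lra | apply Rle_refl].
Qed.

Lemma is_derive_C_gauss_mon_param (A : R -> R) dA s k B z : derivable_pt_lim A s dA ->
  exists L, is_derive_C (fun s => gauss_mon k (A s) B z) s L.
Proof.
  intro HA. eexists. unfold gauss_mon.
  apply is_derive_C_mult; [apply is_derive_C_const |].
  apply is_derive_C_exp, is_derive_C_plus; [| apply is_derive_C_const].
  eapply (is_derive_C_scal A (fun _ => Cmul z z) _ _ _ HA), is_derive_C_const.
Qed.

Lemma derivable_pt_lim_Derive (f : R -> R) x : ex_derive f x -> derivable_pt_lim f x (Derive f x).
Proof. intro H. apply is_derive_Reals. apply Derive_correct. auto. Qed.

Lemma heat_mon_Ccontinuous_time a m z s0 : 0 < s0 -> Ccontinuous (fun s => heat_mon a m s z) s0.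
Proof.
  intro Hs. destruct m as [[r n] k]. unfold heat_mon.
  assert (DA : derivable_pt_lim (fun s => - / (4 * s)) s0 (/ (4 * s0 ^ 2))).
  { apply is_derive_Reals. auto_derive. lra. field. lra. }
  destruct (is_derive_C_gauss_mon_param _ _ s0 k a z DA) as [L HL].
  assert (Dc : ex_derive (fun s => r * / s ^ n * heat_const s) s0).
  { unfold heat_const. pose proof PI_RGT_0.
    auto_derive; repeat split; try apply pow_nonzero; try lra; try nra. apply Rgt_not_eq, sqrt_lt_R0; nra. }
  eapply is_derive_C_Ccontinuous.
  exact (is_derive_C_scal (fun s => r * / s ^ n * heat_const s) _ s0 _ _ (derivable_pt_lim_Derive _ _ Dc) HL).
Qed.

Lemma Ccontinuous_sumC {A} (F : A -> R -> Cplx) L y :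
  (forall m, Ccontinuous (F m) y) -> Ccontinuous (fun s => sumC (fun m => F m s) L) y.
Proof.
  intro H. induction L as [|m L IH]; cbn [sumC]; [apply Ccontinuous_const | apply Ccontinuous_add; auto].
Qed.

Lemma heat_sum_Ccontinuous_time a L z s0 : 0 < s0 -> Ccontinuous (fun s => heat_sum a L s z) s0.
Proof.
  intro Hs. apply (Ccontinuous_sumC (fun m s => heat_mon a m s z)).
  intro m. apply heat_mon_Ccontinuous_time; auto.
Qed.

Lemma sym_mon_Ccontinuous_time m q ts s0 : Ccontinuous (fun s => sym_mon m (ts - s) q) s0.
Proof.
  destruct m as [[c j] k]. unfold sym_mon.
  assert (DA : derivable_pt_lim (fun s => - (ts - s)) s0 1) by (apply is_derive_Reals; auto_derive; auto; ring).
  destruct (is_derive_C_gauss_mon_param _ _ s0 k 0 q DA) as [L HL].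
  assert (Dc : ex_derive (fun s => c * (ts - s) ^ j) s0) by (auto_derive; auto).
  eapply is_derive_C_Ccontinuous.
  exact (is_derive_C_scal (fun s => c * (ts - s) ^ j) _ s0 _ _ (derivable_pt_lim_Derive _ _ Dc) HL).
Qed.

Lemma sym_sum_Ccontinuous_time L q ts s0 : Ccontinuous (fun s => sym_sum L (ts - s) q) s0.
Proof. apply (Ccontinuous_sumC (fun m s => sym_mon m (ts - s) q)). intro m. apply sym_mon_Ccontinuous_time. Qed.

(** * Differentiation under the integral sign *)

Lemma CInt_const_bound f a b M : a <= b -> Ccontinuous_on f a b ->
  (forall y, a <= y <= b -> Cnorm (f y) <= M) -> Cnorm (CInt f a b) <= 2 * (b - a) * M.
Proof.
  intros Hab Hf HM. eapply Rle_trans; [apply (CInt_bound f (fun _ => M)); auto; intros; apply continuous_const |].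
  rewrite RInt_const. unfold scal; simpl. unfold mult; simpl. lra.
Qed.

Lemma quadratic_le_eps K r eps : 0 < K -> 0 <= r -> r <= eps / K -> K * r * r <= eps * r.
Proof.
  intros HK Hr H. apply Rmult_le_compat_r; auto.
  apply (Rmult_le_compat_l K) in H; [| lra]. replace (K * (eps / K)) with eps in H by (field; lra). lra.
Qed.

Lemma is_derive_C_CInt_param (F F1 : R -> R -> Cplx) a b x0 : a < b ->
  (forall x, Ccontinuous_on (fun s => F s x) a b) -> Ccontinuous_on (fun s => F1 s x0) a b ->
  (exists M, 0 < M /\ forall s h, a <= s <= b -> Rabs h <= 1 ->
      Cnorm (Csub (Csub (F s (x0 + h)) (F s x0)) (Cscal h (F1 s x0))) <= M * h ^ 2) ->
  is_derive_C (fun x => CInt (fun s => F s x) a b) x0 (CInt (fun s => F1 s x0) a b).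
Proof.
  intros Hab HF HF1 [M [HM P]] eps He.
  set (K := 2 * (b - a) * M). assert (HK : 0 < K) by (unfold K; nra).
  exists (Rmin 1 (eps / K)). split; [apply Rmin_case; [lra | apply Rdiv_lt_0_compat; lra] |].
  intros h Hh. pose proof (Rmin_l 1 (eps / K)). pose proof (Rmin_r 1 (eps / K)).
  assert (Hc1 : Ccontinuous_on (fun s => Cmul (h, 0) (F1 s x0)) a b)
    by (intros y Hy; apply Ccontinuous_mul; [apply Ccontinuous_const | apply HF1; auto]).
  assert (Hc2 : Ccontinuous_on (fun s => Csub (F s (x0 + h)) (F s x0)) a b)
    by (intros y Hy; apply Ccontinuous_sub; apply HF; auto).
  replace (Cscal h (CInt (fun s => F1 s x0) a b)) with (Cmul (h, 0) (CInt (fun s => F1 s x0) a b)) by ceq.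
  rewrite <- CInt_cmul, <- !CInt_sub; try lra; auto.
  eapply Rle_trans.
  - apply (CInt_const_bound _ a b (M * h ^ 2)); [lra | intros y Hy; apply Ccontinuous_sub; auto |].
    intros y Hy. replace (Cmul (h, 0) (F1 y x0)) with (Cscal h (F1 y x0)) by ceq. apply P; auto; lra.
  - replace (2 * (b - a) * (M * h ^ 2)) with (K * Rabs h * Rabs h) by (unfold K; rewrite <- (pow2_abs h); ring).
    apply quadratic_le_eps; [lra | apply Rabs_pos | lra].
Qed.

Lemma is_Cderiv_CInt_param (F F1 : R -> Cplx -> Cplx) a b z0 : a < b ->
  (forall z, Ccontinuous_on (fun s => F s z) a b) -> Ccontinuous_on (fun s => F1 s z0) a b ->
  (exists M, 0 < M /\ forall s h, a <= s <= b -> Cnorm h <= 1 ->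
      Cnorm (Csub (Csub (F s (Cadd z0 h)) (F s z0)) (Cmul (F1 s z0) h)) <= M * Cnorm h ^ 2) ->
  is_Cderiv (fun z => CInt (fun s => F s z) a b) z0 (CInt (fun s => F1 s z0) a b).
Proof.
  intros Hab HF HF1 [M [HM P]] eps He.
  set (K := 2 * (b - a) * M). assert (HK : 0 < K) by (unfold K; nra).
  exists (Rmin 1 (eps / K)). split; [apply Rmin_case; [lra | apply Rdiv_lt_0_compat; lra] |].
  intros h Hh. pose proof (Rmin_l 1 (eps / K)). pose proof (Rmin_r 1 (eps / K)).
  assert (Cm : Ccontinuous_on (fun s => Cmul (F1 s z0) h) a b)
    by (intros y Hy; apply Ccontinuous_mul; [apply HF1; auto | apply Ccontinuous_const]).
  rewrite <- CInt_mulc, <- !CInt_sub; try lra; auto; [| intros y Hy; apply Ccontinuous_sub; apply HF; auto].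
  eapply Rle_trans.
  - apply (CInt_const_bound _ a b (M * Cnorm h ^ 2)); [lra | | intros y Hy; apply P; auto; lra].
    intros y Hy. apply Ccontinuous_sub; [apply Ccontinuous_sub; apply HF | apply Cm]; auto.
  - replace (2 * (b - a) * (M * Cnorm h ^ 2)) with (K * Cnorm h * Cnorm h) by (unfold K; ring).
    apply quadratic_le_eps; [lra | apply Cnorm_ge0 | lra].
Qed.

(** * The derivatives of the symbol *)

(* [w_dz a alpha s] is [d_z^alpha w(s, .)], [sym_dxi a ts beta s xi] is [d_xi^beta] of
   [(xi + i a)^2 exp (- (ts - s) (xi + i a)^2)], and [p_derivs] their product integrated in [s]. *)
Definition w_dz a (al : nat) (s : R) (z : Cplx) : Cplx :=
  match al with O => w_fun a s z | S n => heat_sum a (heat_derivs a n) s z end.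
Definition sym_dxi a ts (be : nat) (s xi : R) : Cplx := sym_sum (sym_derivs be) (ts - s) (xi, a).
Definition p_derivs a t0 ts (al be : nat) (z : Cplx) (xi : R) : Cplx :=
  CInt (fun s => Cmul (sym_dxi a ts be s xi) (w_dz a al s z)) t0 ts.

Lemma sym_weight_continuous be ts xi s0 : continuous (fun s => sym_weight be (ts - s) xi) s0.
Proof. unfold sym_weight. apply (ex_derive_continuous (K := R_AbsRing) (V := R_NormedModule)). auto_derive. auto. Qed.

(* [xi^2 e^{-(ts - s) xi^2/2}] is the [s]-derivative of [2 e^{-(ts - s) xi^2/2}]. *)
Lemma RInt_sym_weight be t0 ts xi : t0 <= ts ->
  RInt (fun s => sym_weight be (ts - s) xi) t0 ts <= (ts - t0 + 2) * / japan xi ^ be.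
Proof.
  intro H.
  set (G := fun s => / japan xi ^ be * (s + 2 * exp (- ((ts - s) * xi ^ 2) / 2))).
  assert (E : RInt (fun s => sym_weight be (ts - s) xi) t0 ts = G ts - G t0).
  { apply is_RInt_unique. apply (is_RInt_derive (V := R_CompleteNormedModule) G).
    - intros y _. unfold G, sym_weight. auto_derive; auto.
      replace (- ((ts + - y) * (xi * (xi * 1))) * / 2) with (- ((ts - y) * xi ^ 2) / 2) by (unfold Rdiv; ring).
      field. apply pow_nonzero, Rgt_not_eq, japan_pos.
    - intros y _. apply sym_weight_continuous. }
  rewrite E. unfold G. replace (- ((ts - ts) * xi ^ 2) / 2) with 0 by field. rewrite exp_0.
  pose proof (exp_pos (- ((ts - t0) * xi ^ 2) / 2)).
  assert (0 < / japan xi ^ be) by (apply Rinv_0_lt_compat, pow_lt, japan_pos).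
  nra.
Qed.

Lemma CInt_sym_weight_bound f K be t0 ts xi : t0 <= ts -> 0 <= K -> Ccontinuous_on f t0 ts ->
  (forall s, t0 <= s <= ts -> Cnorm (f s) <= K * sym_weight be (ts - s) xi) ->
  Cnorm (CInt f t0 ts) <= 2 * K * (ts - t0 + 2) * / japan xi ^ be.
Proof.
  intros Hts HK Hf Hb. eapply Rle_trans.
  - apply (CInt_bound f (fun s => K * sym_weight be (ts - s) xi)); auto.
    intros y _. apply (continuous_mult (fun _ => K)); [apply continuous_const | apply sym_weight_continuous].
  - rewrite RInt_scalR
      by (apply (ex_RInt_continuous (V := R_CompleteNormedModule)); intros; apply sym_weight_continuous).
    pose proof (RInt_sym_weight be t0 ts xi Hts). nra.
Qed.

Lemma xi2_exp_bound T xi : 0 < T -> xi ^ 2 * exp (- (T * xi ^ 2) / 2) <= 2 / T.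
Proof.
  intro HT. pose proof (pow_mul_exp_neg_le 1 (T / 2) (xi ^ 2) ltac:(lra) (pow2_ge_0 xi)) as P.
  change (INR 1) with 1 in P. rewrite !pow_1 in P.
  replace (- (T * xi ^ 2) / 2) with (- (T / 2 * xi ^ 2)) by field.
  replace (2 / T) with (1 / (T / 2)) by (field; lra). exact P.
Qed.

Section Symbol.

Variables (a t0 ts : R).
Hypotheses (H0 : 0 < t0) (H1 : t0 < ts).

Lemma sym_dxi_taylor be xi : exists M, 0 < M /\ forall s h, t0 <= s <= ts -> Rabs h <= 1 ->
  Cnorm (Csub (Csub (sym_dxi a ts be s (xi + h)) (sym_dxi a ts be s xi)) (Cscal h (sym_dxi a ts (S be) s xi)))
    <= M * h ^ 2.
Proof.
  destruct (sym_sum_local_bound a (ts - t0) (sym_derivs (S (S be))) (Rabs xi + 1) ltac:(lra)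
              ltac:(pose proof (Rabs_pos xi); lra)) as [B [HB PB]].
  exists (2 * B). split; [lra |]. intros s h Hs Hh.
  set (t := ts - s).
  pose proof (holo_taylor (sym_sum (sym_derivs be) t) (sym_sum (sym_derivs (S be)) t)
    (sym_sum (sym_derivs (S (S be))) t) (xi, a) (h, 0) B
    (holo_deriv_sym_derivs _ t) (holo_deriv_sym_derivs _ t)) as T.
  unfold sym_dxi. fold t.
  replace (xi + h, a) with (Cadd (xi, a) (h, 0)) by ceq.
  replace (Cscal h (sym_sum (sym_derivs (S be)) t (xi, a)))
    with (Cmul (sym_sum (sym_derivs (S be)) t (xi, a)) (h, 0))
    by (generalize (sym_sum (sym_derivs (S be)) t (xi, a)); intro; ceq).
  replace (h ^ 2) with (Cnorm (h, 0) ^ 2) by (rewrite Cnorm_pair0, pow2_abs; auto).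
  apply T. intros t' Ht'. replace (line (xi, a) (h, 0) t') with (xi + t' * h, a) by (unfold line; ceq).
  apply PB; [unfold t; lra |].
  eapply Rle_trans; [apply Rabs_triang |]. rewrite Rabs_mult, (Rabs_right t') by lra. nra.
Qed.

Lemma div_one_plus_sq_le C x : 0 <= C -> C / (1 + x ^ 2) <= C.
Proof.
  intro HC. pose proof (pow2_ge_0 x). unfold Rdiv. rewrite <- (Rmult_1_r C) at 2.
  apply Rmult_le_compat_l; [lra |]. rewrite <- Rinv_1. apply Rinv_le_contravar; lra.
Qed.

Lemma w_dz_taylor al b : 0 <= b -> exists M, 0 < M /\ forall s z h, t0 <= s <= ts ->
  Rabs (snd z) <= b -> Cnorm h <= 1 ->
  Cnorm (Csub (Csub (w_dz a al s (Cadd z h)) (w_dz a al s z)) (Cmul (w_dz a (S al) s z) h)) <= M * Cnorm h ^ 2.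
Proof.
  intro Hb. destruct al as [|n].
  - destruct (w_fun_taylor a t0 ts b H0 ltac:(lra) Hb) as [M [HM P]]. exists M. split; auto.
    intros s z h Hs Hz Hh. simpl w_dz. rewrite <- K_a_heat_sum. apply P; auto.
  - destruct (heat_sum_bound a t0 ts (b + 1) (heat_derivs a (S (S n))) H0 ltac:(lra) ltac:(lra)) as [C [HC P]].
    exists (2 * C). split; [lra |]. intros s z h Hs Hz Hh. simpl w_dz.
    apply (holo_taylor (heat_sum a (heat_derivs a n) s) (heat_sum a (heat_derivs a (S n)) s)
             (heat_sum a (heat_derivs a (S (S n))) s)); [apply holo_deriv_heat_derivs; lra.. |].
    intros t Ht. eapply Rle_trans; [apply P; auto | apply div_one_plus_sq_le; lra].
    unfold line. csimpl. pose proof (Cnorm_snd h). pose proof (Rabs_pos (snd h)).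
    eapply Rle_trans; [apply Rabs_triang |]. rewrite Rabs_mult, (Rabs_right t) by lra.
    assert (t * Rabs (snd h) <= 1 * 1) by (apply Rmult_le_compat; lra). lra.
Qed.

Lemma w_dz_bound al b : 0 <= b -> exists H, 0 < H /\ forall s z, t0 <= s <= ts ->
  Rabs (snd z) <= b -> Cnorm (w_dz a al s z) <= H.
Proof.
  intro Hb. destruct al as [|n].
  - apply w_fun_bound; auto; lra.
  - destruct (heat_sum_bound a t0 ts b (heat_derivs a n) H0 ltac:(lra) Hb) as [C [HC P]].
    exists C. split; auto. intros s z Hs Hz. simpl w_dz.
    eapply Rle_trans; [apply P; auto | apply div_one_plus_sq_le; lra].
Qed.

Lemma p_derivs_integrand_Ccontinuous al be z xi :
  Ccontinuous_on (fun s => Cmul (sym_dxi a ts be s xi) (w_dz a al s z)) t0 ts.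
Proof.
  intros y Hy. apply Ccontinuous_mul; [apply sym_sum_Ccontinuous_time |].
  destruct al; simpl; [apply w_fun_Ccontinuous_time | apply heat_sum_Ccontinuous_time]; lra.
Qed.

Lemma Dxi_p_derivs al be : Dxi (p_derivs a t0 ts al be) = p_derivs a t0 ts al (S be).
Proof.
  apply functional_extensionality; intro z. apply functional_extensionality; intro xi.
  apply Rderiv_C_correct.
  apply (is_derive_C_CInt_param (fun s x => Cmul (sym_dxi a ts be s x) (w_dz a al s z))
           (fun s x => Cmul (sym_dxi a ts (S be) s x) (w_dz a al s z))); auto.
  - intro x. apply p_derivs_integrand_Ccontinuous.
  - apply p_derivs_integrand_Ccontinuous.
  - destruct (sym_dxi_taylor be xi) as [M [HM P]].
    destruct (w_dz_bound al (Rabs (snd z)) (Rabs_pos _)) as [Hw [HHw Q]].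
    exists (M * Hw). split; [nra |]. intros s h Hs Hh1.
    replace (Csub (Csub (Cmul (sym_dxi a ts be s (xi + h)) (w_dz a al s z)) (Cmul (sym_dxi a ts be s xi) (w_dz a al s z)))
       (Cscal h (Cmul (sym_dxi a ts (S be) s xi) (w_dz a al s z)))) with
       (Cmul (Csub (Csub (sym_dxi a ts be s (xi + h)) (sym_dxi a ts be s xi)) (Cscal h (sym_dxi a ts (S be) s xi)))
         (w_dz a al s z))
      by (generalize (sym_dxi a ts be s (xi + h)) (sym_dxi a ts be s xi) (sym_dxi a ts (S be) s xi) (w_dz a al s z);
          intros; ceq).
    rewrite Cnorm_mul. replace (M * Hw * h ^ 2) with (M * h ^ 2 * Hw) by ring.
    apply Rmult_le_compat; [apply Cnorm_ge0 | apply Cnorm_ge0 | apply P; auto | apply Q; auto; lra].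
Qed.

Lemma Dz_p_derivs al be : Dz (p_derivs a t0 ts al be) = p_derivs a t0 ts (S al) be.
Proof.
  apply functional_extensionality; intro z. apply functional_extensionality; intro xi.
  apply Cderiv_correct.
  apply (is_Cderiv_CInt_param (fun s z => Cmul (sym_dxi a ts be s xi) (w_dz a al s z))
           (fun s z => Cmul (sym_dxi a ts be s xi) (w_dz a (S al) s z))); auto.
  - intro x. apply p_derivs_integrand_Ccontinuous.
  - apply p_derivs_integrand_Ccontinuous.
  - destruct (w_dz_taylor al (Rabs (snd z)) (Rabs_pos _)) as [M [HM P]].
    destruct (sym_sum_local_bound a (ts - t0) (sym_derivs be) (Rabs xi) ltac:(lra) (Rabs_pos _)) as [G [HG Q]].
    exists (G * M). split; [nra |]. intros s h Hs Hh1.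
    replace (Csub (Csub (Cmul (sym_dxi a ts be s xi) (w_dz a al s (Cadd z h))) (Cmul (sym_dxi a ts be s xi) (w_dz a al s z)))
       (Cmul (Cmul (sym_dxi a ts be s xi) (w_dz a (S al) s z)) h)) with
       (Cmul (sym_dxi a ts be s xi) (Csub (Csub (w_dz a al s (Cadd z h)) (w_dz a al s z)) (Cmul (w_dz a (S al) s z) h)))
      by (generalize (sym_dxi a ts be s xi) (w_dz a al s (Cadd z h)) (w_dz a al s z) (w_dz a (S al) s z); intros; ceq).
    rewrite Cnorm_mul, Rmult_assoc.
    apply Rmult_le_compat; [apply Cnorm_ge0 | apply Cnorm_ge0 | apply Q; lra | apply P; auto; lra].
Qed.

Lemma iter_Dz_Dxi_p_derivs al be :
  Nat.iter al Dz (Nat.iter be Dxi (p_derivs a t0 ts 0 0)) = p_derivs a t0 ts al be.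
Proof.
  induction al as [|al IH]; simpl.
  - induction be as [|be IH]; simpl; [reflexivity | rewrite IH; apply Dxi_p_derivs].
  - rewrite IH. apply Dz_p_derivs.
Qed.

Lemma Cexp_time_Ccontinuous q s0 : Ccontinuous (fun s => Cexp (Cscal (- (ts - s)) q)) s0.
Proof.
  eapply is_derive_C_Ccontinuous. apply is_derive_C_exp.
  apply (is_derive_C_scal (fun s => - (ts - s)) (fun _ => q) _ 1); [| apply is_derive_C_const].
  apply is_derive_Reals. auto_derive; auto; ring.
Qed.

Lemma p_sym_p_derivs : p_sym a t0 ts = p_derivs a t0 ts 0 0.
Proof.
  apply functional_extensionality; intro z. apply functional_extensionality; intro xi.
  unfold p_sym, p_derivs. cbv zeta.
  rewrite <- CInt_cmul;
    [| lra | intros y Hy; apply Ccontinuous_mul; [apply Cexp_time_Ccontinuous | apply w_fun_Ccontinuous_time; lra]].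
  f_equal. apply functional_extensionality; intro s.
  unfold sym_dxi, sym_derivs, sym_sum. simpl Nat.iter. cbn [sumC]. unfold sym_mon, gauss_mon, w_dz. simpl Cpow.
  replace (Cadd (Cscal (- (ts - s)) (Cmul (xi, a) (xi, a))) (Cscal 0 (xi, a)))
    with (Cscal (- (ts - s)) (Cmul (xi, a) (xi, a))) by ceq.
  generalize (Cexp (Cscal (- (ts - s)) (Cmul (xi, a) (xi, a)))) (w_fun a s z). intros E W. ceq.
Qed.

Theorem p_sym_derivs_bound b : 0 < b -> forall al be : nat,
  exists Cst, 0 < Cst /\ forall z xi, Rabs (snd z) < b ->
    Cnorm (Nat.iter al Dz (Nat.iter be Dxi (p_sym a t0 ts)) z xi) <= Cst * / (japan xi ^ be).
Proof.
  intros Hb al be.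
  destruct (sym_sum_decay a (ts - t0) be (sym_derivs be) ltac:(lra) (sym_derivs_balanced be)) as [D [HD PD]].
  destruct (w_dz_bound al b ltac:(lra)) as [Hw [HHw PH]].
  exists (2 * (Hw * D) * (ts - t0 + 2)). split; [apply Rmult_lt_0_compat; nra |]. intros z xi Hz.
  rewrite p_sym_p_derivs, iter_Dz_Dxi_p_derivs.
  apply CInt_sym_weight_bound; [lra | nra | apply p_derivs_integrand_Ccontinuous |].
  intros s Hs. rewrite Cnorm_mul, Rmult_comm, Rmult_assoc.
  apply Rmult_le_compat; [apply Cnorm_ge0 | apply Cnorm_ge0 | apply PH; lra | apply PD; lra].
Qed.

Lemma sym_dxi_0 s xi : sym_dxi a ts 0 s xi = gauss_mon 2 (- (ts - s)) 0 (xi, a).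
Proof.
  unfold sym_dxi, sym_derivs, sym_sum, sym_mon. simpl Nat.iter. cbn [sumC].
  generalize (gauss_mon 2 (- (ts - s)) 0 (xi, a)). intro. simpl pow. ceq.
Qed.

Lemma CInt_sym_dxi_0 xi :
  CInt (fun s => sym_dxi a ts 0 s xi) t0 ts = Csub C1 (gauss_mon 0 (- (ts - t0)) 0 (xi, a)).
Proof.
  rewrite (CInt_FTC (fun s => gauss_mon 0 (- (ts - s)) 0 (xi, a)));
    [| lra | | intros y Hy; apply sym_sum_Ccontinuous_time].
  - f_equal. unfold gauss_mon. simpl Cpow.
    replace (Cadd (Cscal (- (ts - ts)) (Cmul (xi, a) (xi, a))) (Cscal 0 (xi, a))) with (0, 0) by ceq.
    unfold Cexp. cbn [fst snd]. rewrite exp_0, cos_0, sin_0. ceq.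
  - intros s _. rewrite sym_dxi_0. eapply is_derive_C_val.
    + unfold gauss_mon. apply is_derive_C_mult; [apply is_derive_C_const |]. apply is_derive_C_exp.
      apply is_derive_C_plus; [| apply is_derive_C_const].
      apply (is_derive_C_scal (fun s => - (ts - s)) (fun _ => Cmul (xi, a) (xi, a)) _ 1); [| apply is_derive_C_const].
      apply is_derive_Reals. auto_derive; auto; ring.
    + unfold gauss_mon. simpl Cpow.
      generalize (Cexp (Cadd (Cscal (- (ts - s)) (Cmul (xi, a) (xi, a))) (Cscal 0 (xi, a)))). intro. ceq.
Qed.

(* Integrating [g_0 = d_s e^{-(ts - s) q^2}] against [w(ts)] isolates the boundary term. *)
Lemma p_sym_sub_w_eq z xi :
  Csub (p_sym a t0 ts z xi) (w_fun a ts z) =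
  Csub (CInt (fun s => Cmul (sym_dxi a ts 0 s xi) (Csub (w_fun a s z) (w_fun a ts z))) t0 ts)
       (Cmul (gauss_mon 0 (- (ts - t0)) 0 (xi, a)) (w_fun a ts z)).
Proof.
  rewrite p_sym_p_derivs. unfold p_derivs, w_dz.
  assert (Cg : Ccontinuous_on (fun s => sym_dxi a ts 0 s xi) t0 ts) by (intros y _; apply sym_sum_Ccontinuous_time).
  assert (Cw : Ccontinuous_on (fun s => w_fun a s z) t0 ts) by (intros y Hy; apply w_fun_Ccontinuous_time; lra).
  replace (fun s => Cmul (sym_dxi a ts 0 s xi) (Csub (w_fun a s z) (w_fun a ts z)))
    with (fun s => Csub (Cmul (sym_dxi a ts 0 s xi) (w_fun a s z)) (Cmul (sym_dxi a ts 0 s xi) (w_fun a ts z)))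
    by (apply functional_extensionality; intro s; generalize (sym_dxi a ts 0 s xi) (w_fun a s z); intros; ceq).
  rewrite CInt_sub, CInt_mulc, CInt_sym_dxi_0; try lra; auto;
    [| intros y Hy; apply Ccontinuous_mul; auto
     | intros y Hy; apply Ccontinuous_mul; [apply Cg | apply Ccontinuous_const]; auto].
  generalize (CInt (fun s => Cmul (sym_dxi a ts 0 s xi) (w_fun a s z)) t0 ts)
    (gauss_mon 0 (- (ts - t0)) 0 (xi, a)) (w_fun a ts z). intros. ceq.
Qed.

Lemma p_sym_sub_w_integral_bound : exists C, 0 < C /\ forall x xi,
  Cnorm (CInt (fun s => Cmul (sym_dxi a ts 0 s xi) (Csub (w_fun a s (RtoC x)) (w_fun a ts (RtoC x)))) t0 ts)
    <= C * / japan xi ^ 2.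
Proof.
  destruct (w_fun_lipschitz_time a t0 ts 0 H0 ltac:(lra) ltac:(lra)) as [L [HL PL]].
  destruct (sym_mon_decay a (ts - t0) 2 (1, 1%nat, 2%nat) ltac:(lra) ltac:(simpl; lia)) as [D [HD PD]].
  exists (2 * (L * D) * (ts - t0 + 2)). split; [apply Rmult_lt_0_compat; nra |]. intros x xi.
  apply CInt_sym_weight_bound; [lra | nra | |].
  - intros y Hy. apply Ccontinuous_mul; [apply sym_sum_Ccontinuous_time |].
    apply Ccontinuous_sub; [apply w_fun_Ccontinuous_time; lra | apply Ccontinuous_const].
  - intros s Hs. rewrite Cnorm_mul, sym_dxi_0.
    assert (Lw : Cnorm (Csub (w_fun a s (RtoC x)) (w_fun a ts (RtoC x))) <= L * (ts - s)).
    { eapply Rle_trans; [apply PL; [lra | lra | simpl; rewrite Rabs_R0; lra] |].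
      rewrite Rabs_left1 by lra. right; ring. }
    specialize (PD (ts - s) xi ltac:(lra)). unfold sym_mon in PD.
    rewrite Cnorm_scal, Rabs_right in PD by (simpl; lra). simpl pow in PD. rewrite Rmult_1_r, Rmult_1_l in PD.
    pose proof (Cnorm_ge0 (gauss_mon 2 (- (ts - s)) 0 (xi, a))).
    apply Rle_trans with (Cnorm (gauss_mon 2 (- (ts - s)) 0 (xi, a)) * (L * (ts - s)));
      [apply Rmult_le_compat_l; auto |].
    replace (Cnorm (gauss_mon 2 (- (ts - s)) 0 (xi, a)) * (L * (ts - s)))
      with (L * ((ts - s) * Cnorm (gauss_mon 2 (- (ts - s)) 0 (xi, a)))) by ring.
    rewrite Rmult_assoc. apply Rmult_le_compat_l; lra.
Qed.

Lemma p_sym_sub_w_boundary_bound : exists C, 0 < C /\ forall x xi,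
  Cnorm (Cmul (gauss_mon 0 (- (ts - t0)) 0 (xi, a)) (w_fun a ts (RtoC x))) <= C * / japan xi ^ 2.
Proof.
  set (T := ts - t0). assert (HT : 0 < T) by (unfold T; lra).
  destruct (w_fun_bound a t0 ts 0 H0 ltac:(lra) ltac:(lra)) as [W [HW PW]].
  destruct (sym_mon_decay a T 2 (1, 0%nat, 0%nat) ltac:(lra) ltac:(simpl; lia)) as [D [HD PD]].
  assert (0 < 2 / T) by (apply Rdiv_lt_0_compat; lra).
  exists (D * (1 + 2 / T) * W). split; [apply Rmult_lt_0_compat; nra |].
  intros x xi. rewrite Cnorm_mul.
  specialize (PD T xi ltac:(lra)). unfold sym_mon in PD. rewrite Cnorm_scal in PD. simpl pow in PD.
  rewrite Rmult_1_r, Rabs_R1, Rmult_1_l in PD.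
  specialize (PW ts (RtoC x) ltac:(lra) ltac:(simpl; rewrite Rabs_R0; lra)).
  unfold sym_weight in PD. pose proof (xi2_exp_bound T xi HT).
  assert (HJ : 0 < / japan xi ^ 2) by (apply Rinv_0_lt_compat, pow_lt, japan_pos).
  assert (HE : Cnorm (gauss_mon 0 (- T) 0 (xi, a)) <= D * (1 + 2 / T) * / japan xi ^ 2).
  { eapply Rle_trans; [apply PD |]. rewrite (Rmult_comm (/ japan xi ^ 2)), <- Rmult_assoc.
    apply Rmult_le_compat_r; [lra | apply Rmult_le_compat_l; lra]. }
  replace (D * (1 + 2 / T) * W * / japan xi ^ 2) with (D * (1 + 2 / T) * / japan xi ^ 2 * W) by ring.
  apply Rmult_le_compat; [apply Cnorm_ge0 | apply Cnorm_ge0 | exact HE | exact PW].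
Qed.

Theorem p_sym_sub_w_bound : exists Cst, 0 < Cst /\ forall x xi : R,
  Cnorm (Csub (p_sym a t0 ts (RtoC x) xi) (w_fun a ts (RtoC x))) <= Cst * / (japan xi ^ 2).
Proof.
  destruct p_sym_sub_w_integral_bound as [C1 [HC1 P1]].
  destruct p_sym_sub_w_boundary_bound as [C2 [HC2 P2]].
  exists (C1 + C2). split; [lra |]. intros x xi.
  rewrite p_sym_sub_w_eq. eapply Rle_trans; [apply Cnorm_sub_tri |].
  specialize (P1 x xi). specialize (P2 x xi). lra.
Qed.

End Symbol.

Theorem mainTheorem6 (a tau0 taus : R) (H0 : 0 < tau0) (H1 : tau0 < taus) :
  (forall b : R, 0 < b -> forall alpha beta : nat,
     exists Cst : R, 0 < Cst /\
       forall (z : Cplx) (xi : R), Rabs (snd z) < b ->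
         Cnorm (Nat.iter alpha Dz (Nat.iter beta Dxi (p_sym a tau0 taus)) z xi)
           <= Cst * / (japan xi ^ beta)) /\
  (exists Cst : R, 0 < Cst /\
     forall x xi : R,
       Cnorm (Csub (p_sym a tau0 taus (RtoC x) xi) (w_fun a taus (RtoC x)))
         <= Cst * / (japan xi ^ 2)).
Proof.
  split.
  - exact (p_sym_derivs_bound a tau0 taus H0 H1).
  - exact (p_sym_sub_w_bound a tau0 taus H0 H1).
Qed.
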